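(* For $k>0$ and $\varepsilon\in\mathbb{R}$ consider the initial value problem $$\Delta^3u=-\frac{1}{u^3},\quad u(0)=k,\quad \Delta u(0)=-\varepsilon,\quad \Delta^2u(0)=1,\quad u'(0)=(\Delta u)'(0)=(\Delta^2u)'(0)=0, \tag{P}$$ and let $S_k:=\{\varepsilon>0:\ \text{(P) has a positive entire radial solution}\}$. There exists $k_0>0$ such that for every $k\ge k_0$ the set $S_k$ is nonempty and bounded above, and, writing $\varepsilon_k^*:=\sup S_k$, problem (P) with $\varepsilon=\varepsilon_k^*$ has a positive entire radial solution.
   Context: A radial function on $\mathbb{R}^3$ is written $u(r)$, $r=|x|$; for radial functions $\Delta w=w''+\frac{2}{r}w'$. A positive entire radial solution is a smooth radial function defined and positive on all of $\mathbb{R}^3$ solving the ODE with the given initial data at $r=0$. *)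

From Stdlib Require Import Reals Lra.
From Coquelicot Require Import Coquelicot.
Open Scope R_scope.

Definition smooth (f : R -> R) : Prop :=
  forall (n : nat) (x : R), ex_derive_n f n x.

Definition even_fun (f : R -> R) : Prop := forall r, f (- r) = f r.

(* A radial profile r |-> f r (r >= 0) gives a smooth function f(|x|) on R^3
   iff it extends to an even smooth function on R; we use that extension. *)
Definition smooth_radial (f : R -> R) : Prop := smooth f /\ even_fun f.

Definition radLap (f : R -> R) (r : R) : R :=
  Derive_n f 2 r + 2 / r * Derive f r.

(* (P) has a positive entire radial solution for the data k, eps:
   u is a smooth radial function, positive everywhere, v = Delta u and
   w = Delta^2 u (smooth radial, hence their values at 0 are the continuous
   extensions), Delta^3 u = -1/u^3, and the initial conditions hold. *)
Definition has_pos_entire_radial_sol (k eps : R) : Prop :=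
  exists u v w : R -> R,
    smooth_radial u /\ smooth_radial v /\ smooth_radial w /\
    (forall r, 0 < u r) /\
    (forall r, 0 < r -> radLap u r = v r) /\
    (forall r, 0 < r -> radLap v r = w r) /\
    (forall r, 0 < r -> radLap w r = - / (u r ^ 3)) /\
    u 0 = k /\ v 0 = - eps /\ w 0 = 1 /\
    Derive u 0 = 0 /\ Derive v 0 = 0 /\ Derive w 0 = 0.

Definition S_k (k : R) : R -> Prop :=
  fun eps => 0 < eps /\ has_pos_entire_radial_sol k eps.

From Stdlib Require Import Reals Lra Psatz Classical IndefiniteDescription.
From Coquelicot Require Import Coquelicot.
Open Scope R_scope.

(* Writing [K] for the radial inverse Laplacian of [R^3] (vanishing with its derivative at
   [0]), (P) is the fixed-point problem [u = k + K (- eps + K (1 + K (- u ^ -3)))].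
   - Any solution lies below the supersolution [k - eps r^2 / 6 + r^4 / 120]; at [r^2 = 10 eps]
     this gives [eps^2 < 6 k / 5], so [S_k] is bounded.
   - For [eps = 1] and [k >= 100], monotone iteration from that supersolution stays above the
     subsolution [1 + r^2] and converges to a solution, so [S_k] is nonempty.
   - Solutions decrease as [eps] increases (comparison principle), and on [[- R, R]] they are
     bounded below by a constant depending only on [k] and [R]: a very small value of [u] would
     make [Δ²u] so negative that [u] itself becomes negative further out. With the resulting
     Lipschitz bounds, the solutions for [eps_n] increasing to [sup S_k] converge to a
     solution for [sup S_k]. *)

(** * Real calculus *)

Definition cont (f : R -> R) : Prop := forall x, continuous f x.

Lemma continuous_R_iff (f : R -> R) (x : R) :
  continuous f x <->
  forall eps, 0 < eps -> exists d, 0 < d /\ forall y, Rabs (y - x) < d -> Rabs (f y - f x) < eps.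
Proof.
  transitivity (continuity_pt f x); [symmetry; apply continuity_pt_filterlim|]. split.
  - intros H eps Heps. destruct (H eps Heps) as [d [Hd Hy]].
    exists d. split; [lra|]. intros y Hy'.
    destruct (Req_dec y x) as [->|Hne]; [rewrite Rminus_diag, Rabs_R0; lra|].
    apply Hy. split; [split; [exact I | auto] | exact Hy'].
  - intros H eps Heps. destruct (H eps Heps) as [d [Hd Hy]].
    exists d. split; [lra|]. intros y [_ Hy']. apply Hy, Hy'.
Qed.

(* Coquelicot's lemmas specialized to real functions of a real variable: in their generic
   form, unification does not find the normed module structure of [R]. *)
Lemma ex_derive_continuousR (f : R -> R) x : ex_derive f x -> continuous f x.
Proof. apply (ex_derive_continuous (V := R_NormedModule)). Qed.

Lemma cont_plus f g : cont f -> cont g -> cont (fun x => f x + g x).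
Proof. intros Hf Hg x. apply (continuous_plus (V := R_NormedModule)); auto. Qed.

Lemma cont_minus f g : cont f -> cont g -> cont (fun x => f x - g x).
Proof. intros Hf Hg x. apply (continuous_minus (V := R_NormedModule)); auto. Qed.

Lemma cont_mult f g : cont f -> cont g -> cont (fun x => f x * g x).
Proof. intros Hf Hg x. apply (continuous_mult (K := R_AbsRing)); auto. Qed.

Lemma cont_const c : cont (fun _ => c).
Proof. intros x. apply continuous_const. Qed.

Lemma cont_scal c f : cont f -> cont (fun x => c * f x).
Proof. apply cont_mult, cont_const. Qed.

Lemma cont_pow n : cont (fun x => x ^ n).
Proof. intros x. apply ex_derive_continuousR. auto_derive. auto. Qed.

Lemma cont_inv f : (forall x, f x <> 0) -> cont f -> cont (fun x => / f x).
Proof.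
  intros Hnz Hf x. apply continuity_pt_filterlim, continuity_pt_inv; auto.
  apply continuity_pt_filterlim, Hf.
Qed.

Lemma ex_RInt_cont (f : R -> R) a b : cont f -> ex_RInt f a b.
Proof. intros Hf. apply (ex_RInt_continuous (V := R_CompleteNormedModule)). intros; apply Hf. Qed.

Lemma RInt_extR (f g : R -> R) a b :
  (forall x, Rmin a b < x < Rmax a b -> f x = g x) -> RInt f a b = RInt g a b.
Proof. apply RInt_ext. Qed.

Lemma ex_RInt_minusR (f g : R -> R) a b : ex_RInt f a b -> ex_RInt g a b ->
  ex_RInt (fun x => f x - g x) a b.
Proof. apply (ex_RInt_minus (V := R_NormedModule)). Qed.

Lemma RInt_plusR (f g : R -> R) a b : ex_RInt f a b -> ex_RInt g a b ->
  RInt (fun x => f x + g x) a b = RInt f a b + RInt g a b.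
Proof. apply (RInt_plus (V := R_CompleteNormedModule)). Qed.

Lemma RInt_minusR (f g : R -> R) a b : ex_RInt f a b -> ex_RInt g a b ->
  RInt (fun x => f x - g x) a b = RInt f a b - RInt g a b.
Proof. apply (RInt_minus (V := R_CompleteNormedModule)). Qed.

Lemma RInt_scalR (f : R -> R) a b c : ex_RInt f a b ->
  RInt (fun x => c * f x) a b = c * RInt f a b.
Proof. apply (RInt_scal (V := R_CompleteNormedModule)). Qed.

Lemma RInt_constR a b c : RInt (fun _ => c) a b = c * (b - a).
Proof.
  rewrite (RInt_const (V := R_CompleteNormedModule)). unfold scal; simpl; unfold mult; simpl. ring.
Qed.

Lemma RInt_pointR (f : R -> R) a : RInt f a a = 0.
Proof. apply (RInt_point (V := R_CompleteNormedModule)). Qed.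

Lemma RInt_ChaslesR (f : R -> R) a b c : ex_RInt f a b -> ex_RInt f b c ->
  RInt f a b + RInt f b c = RInt f a c.
Proof. apply (RInt_Chasles (V := R_CompleteNormedModule)). Qed.

Lemma RInt_deriveR (f df : R -> R) a b :
  (forall x, Rmin a b <= x <= Rmax a b -> is_derive f x (df x)) ->
  (forall x, Rmin a b <= x <= Rmax a b -> continuous df x) ->
  RInt df a b = f b - f a.
Proof.
  intros Hd Hc. apply (is_RInt_unique (V := R_CompleteNormedModule)).
  apply (is_RInt_derive (V := R_CompleteNormedModule)); auto.
Qed.

Lemma is_derive_RInt_from_0 (g : R -> R) x : cont g -> is_derive (fun t => RInt g 0 t) x (g x).
Proof.
  intros Hg. apply (is_derive_RInt (V := R_NormedModule) g (fun t => RInt g 0 t) 0 x).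
  - apply filter_forall. intros b. apply (RInt_correct (V := R_CompleteNormedModule)).
    apply ex_RInt_cont, Hg.
  - apply Hg.
Qed.

Lemma is_derive_constR (c x : R) : is_derive (fun _ => c) x 0.
Proof. apply (is_derive_const c x). Qed.

Lemma is_derive_idR (x : R) : is_derive (fun y => y) x 1.
Proof. apply (is_derive_id x). Qed.

Lemma is_derive_plusR (f g : R -> R) x a b :
  is_derive f x a -> is_derive g x b -> is_derive (fun y => f y + g y) x (a + b).
Proof. intros H1 H2. exact (is_derive_plus f g x a b H1 H2). Qed.

Lemma is_derive_minusR (f g : R -> R) x a b :
  is_derive f x a -> is_derive g x b -> is_derive (fun y => f y - g y) x (a - b).
Proof. intros H1 H2. exact (is_derive_minus f g x a b H1 H2). Qed.

Lemma is_derive_multR (f g : R -> R) x a b : is_derive f x a -> is_derive g x b ->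
  is_derive (fun y => f y * g y) x (a * g x + f x * b).
Proof. intros H1 H2. exact (is_derive_mult f g x a b H1 H2 Rmult_comm). Qed.

Lemma is_derive_compR (f g : R -> R) x a b :
  is_derive f (g x) a -> is_derive g x b -> is_derive (fun y => f (g y)) x (b * a).
Proof. intros H1 H2. exact (is_derive_comp f g x a b H1 H2). Qed.

Lemma is_derive_scalR (f : R -> R) x c a :
  is_derive f x a -> is_derive (fun y => c * f y) x (c * a).
Proof. intros H. exact (is_derive_scal f x c a H). Qed.

Lemma is_derive_linR (c x : R) : is_derive (fun y => c * y) x c.
Proof. auto_derive; auto; ring. Qed.

Lemma is_derive_replace (f : R -> R) (x a b : R) : a = b -> is_derive f x a -> is_derive f x b.
Proof. intros ->; auto. Qed.

Lemma eq_of_is_derive_0 (g : R -> R) a b :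
  (forall x, Rmin a b < x < Rmax a b -> is_derive g x 0) ->
  (forall x, Rmin a b <= x <= Rmax a b -> continuous g x) -> g b = g a.
Proof.
  intros Hd Hc. destruct (MVT_gen g a b (fun _ => 0)) as [c [_ Hc']]; auto.
  - intros x Hx. apply continuity_pt_filterlim, Hc, Hx.
  - lra.
Qed.

Lemma Rdiv_le_of_le_mult x y c : 0 < y -> x <= c * y -> x / y <= c.
Proof.
  intros Hy H. apply Rmult_le_reg_r with y; auto.
  unfold Rdiv. rewrite Rmult_assoc, Rinv_l by lra. lra.
Qed.

Lemma pow_le_1 x n : 0 <= x <= 1 -> x ^ n <= 1.
Proof.
  intros Hx. induction n; simpl; [lra|].
  assert (0 <= x ^ n) by (apply pow_le; lra). nra.
Qed.

(** * The radial inverse Laplacian *)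

(* [moment j f t = t ^ -(j + 1) * RInt (fun s => s ^ j * f s) 0 t] ([moment_scale]), rescaled
   to [[0, 1]] so that it stays smooth and even at [t = 0]. *)
Definition moment (j : nat) (f : R -> R) (t : R) : R :=
  RInt (fun s => s ^ j * f (t * s)) 0 1.

(* [z = invLap f] solves [z'' + 2 z' / r = f] with [z 0 = z' 0 = 0], since
   [z' t = t ^ -2 * RInt (fun s => s ^ 2 * f s) 0 t = t * moment 2 f t]. *)
Definition invLap (f : R -> R) (r : R) : R := RInt (fun t => t * moment 2 f t) 0 r.

Section Moment.

Variable f : R -> R.
Hypothesis Hf : cont f.

Lemma cont_moment_integrand j t : cont (fun s => s ^ j * f (t * s)).
Proof.
  apply cont_mult; [apply cont_pow|]. intros s.
  apply (continuous_comp (fun s => t * s) f); [|apply Hf].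
  apply ex_derive_continuousR. auto_derive. auto.
Qed.

Lemma ex_RInt_moment j t : ex_RInt (fun s => s ^ j * f (t * s)) 0 1.
Proof. apply ex_RInt_cont, cont_moment_integrand. Qed.

Lemma cont_moment j : cont (moment j f).
Proof.
  intros t0. apply continuous_R_iff. intros eps Heps.
  set (R0 := Rabs t0 + 1).
  assert (HU : uniform_continuity f (fun c => - R0 <= c <= R0)).
  { apply Heine. apply compact_P3. intros x _. apply continuity_pt_filterlim, Hf. }
  destruct (HU (mkposreal (eps / 2) ltac:(lra))) as [[d Hd] Hdd]. simpl in Hdd.
  exists (Rmin d 1). split; [apply Rmin_glb_lt; lra|].
  intros t Ht.
  assert (Hd1 : Rabs (t - t0) < d) by (eapply Rlt_le_trans; [exact Ht | apply Rmin_l]).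
  assert (Ht1 : Rabs (t - t0) < 1) by (eapply Rlt_le_trans; [exact Ht | apply Rmin_r]).
  assert (Hta : Rabs t <= R0).
  { unfold R0. replace t with (t0 + (t - t0)) by ring.
    eapply Rle_trans; [apply Rabs_triang | lra]. }
  assert (Ht0a : Rabs t0 <= R0) by (unfold R0; lra).
  unfold moment. rewrite <- RInt_minusR by apply ex_RInt_moment.
  apply Rle_lt_trans with ((1 - 0) * (eps / 2)); [|lra].
  apply abs_RInt_le_const; [lra | apply ex_RInt_minusR; apply ex_RInt_moment |].
  intros s Hs.
  replace (s ^ j * f (t * s) - s ^ j * f (t0 * s)) with (s ^ j * (f (t * s) - f (t0 * s))) by ring.
  rewrite Rabs_mult, <- (Rmult_1_l (eps / 2)).
  apply Rmult_le_compat; try apply Rabs_pos.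
  - rewrite <- RPow_abs, Rabs_right by lra. apply pow_le_1. lra.
  - assert (0 <= Rabs t) by apply Rabs_pos. assert (0 <= Rabs t0) by apply Rabs_pos.
    apply Rlt_le, Hdd.
    + apply Rabs_le_between. rewrite Rabs_mult, (Rabs_right s) by lra. nra.
    + apply Rabs_le_between. rewrite Rabs_mult, (Rabs_right s) by lra. nra.
    + rewrite <- Rmult_minus_distr_r, Rabs_mult, (Rabs_right s) by lra.
      apply Rle_lt_trans with (Rabs (t - t0)); [|exact Hd1].
      rewrite <- (Rmult_1_r (Rabs (t - t0))) at 2.
      apply Rmult_le_compat_l; [apply Rabs_pos | lra].
Qed.

Lemma moment_scale j t : t ^ S j * moment j f t = RInt (fun s => s ^ j * f s) 0 t.
Proof.
  assert (Hex : ex_RInt (fun s => s ^ j * f s) (t * 0 + 0) (t * 1 + 0)).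
  { apply ex_RInt_cont, cont_mult; [apply cont_pow | apply Hf]. }
  pose proof (RInt_comp_lin (V := R_CompleteNormedModule) (fun s => s ^ j * f s) t 0 0 1 Hex) as H.
  replace (t * 0 + 0) with 0 in H by ring. replace (t * 1 + 0) with t in H by ring.
  rewrite <- H. unfold moment. rewrite <- RInt_scalR by apply ex_RInt_moment.
  apply RInt_extR. intros x _. unfold scal; simpl; unfold mult; simpl.
  rewrite Rplus_0_r, Rpow_mult_distr. simpl. ring.
Qed.

Lemma moment_bound j t B :
  (forall s, Rabs s <= Rabs t -> Rabs (f s) <= B) -> Rabs (moment j f t) <= B.
Proof.
  intros H. unfold moment. replace B with ((1 - 0) * B) by ring.
  apply abs_RInt_le_const; [lra | apply ex_RInt_moment |].
  intros s Hs. rewrite Rabs_mult, <- (Rmult_1_l B).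
  apply Rmult_le_compat; try apply Rabs_pos.
  - rewrite <- RPow_abs, Rabs_right by lra. apply pow_le_1; lra.
  - apply H. rewrite Rabs_mult, (Rabs_right s) by lra.
    assert (0 <= Rabs t) by apply Rabs_pos. nra.
Qed.

End Moment.

Lemma moment_ext j f g t : (forall s, f s = g s) -> moment j f t = moment j g t.
Proof. intros H. unfold moment. apply RInt_extR. intros. rewrite H. auto. Qed.

Lemma moment_even j f : even_fun f -> even_fun (moment j f).
Proof.
  intros He t. unfold moment. apply RInt_extR. intros x _.
  replace (- t * x) with (- (t * x)) by ring. rewrite He. reflexivity.
Qed.

Lemma moment_le j f g t : cont f -> cont g -> 0 < t ->
  (forall s, 0 <= s < t -> f s <= g s) -> moment j f t <= moment j g t.
Proof.
  intros Hf Hg Ht H. unfold moment.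
  apply RInt_le; [lra | apply ex_RInt_moment; auto | apply ex_RInt_moment; auto |].
  intros x Hx. apply Rmult_le_compat_l; [apply pow_le; lra|].
  apply H. split; nra.
Qed.

Lemma moment_le_0 j f t : cont f -> 0 < t ->
  (forall s, 0 <= s < t -> f s <= 0) -> moment j f t <= 0.
Proof.
  intros Hf Ht H. replace 0 with (moment j (fun _ => 0) t).
  - apply moment_le; auto. apply cont_const.
  - unfold moment. rewrite (RInt_extR _ (fun _ => 0)) by (intros; ring). rewrite RInt_constR. ring.
Qed.

Lemma moment_plus j f g t : cont f -> cont g ->
  moment j (fun s => f s + g s) t = moment j f t + moment j g t.
Proof.
  intros Hf Hg. unfold moment. rewrite <- RInt_plusR by (apply ex_RInt_moment; auto).
  apply RInt_extR. intros. ring.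
Qed.

Lemma moment_scal j f c t : cont f -> moment j (fun s => c * f s) t = c * moment j f t.
Proof.
  intros Hf. unfold moment. rewrite <- RInt_scalR by (apply ex_RInt_moment; auto).
  apply RInt_extR. intros. ring.
Qed.

Lemma moment_pow j n t : moment j (fun s => s ^ n) t = t ^ n / INR (j + n + 1).
Proof.
  unfold moment.
  rewrite (RInt_extR _ (fun s => t ^ n * s ^ (j + n))).
  2:{ intros x _. rewrite Rpow_mult_distr, pow_add. ring. }
  rewrite RInt_scalR by apply ex_RInt_cont, cont_pow.
  rewrite (RInt_deriveR (fun s => s ^ (j + n + 1) / INR (j + n + 1))).
  - rewrite pow1, pow_i by lia. field. apply not_0_INR. lia.
  - intros x _. auto_derive; auto. rewrite Nat.add_1_r. simpl pred. field. apply not_0_INR. lia.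
  - intros; apply cont_pow.
Qed.

Lemma is_derive_moment j f f' t : (forall x, is_derive f x (f' x)) -> cont f' ->
  is_derive (moment j f) t (moment (S j) f' t).
Proof.
  intros Hd Hc.
  assert (Hcf : cont f) by (intros x; apply ex_derive_continuousR; eexists; apply Hd).
  assert (Hds : forall u v, is_derive (fun z => v ^ j * f (z * v)) u (v ^ S j * f' (u * v))).
  { intros u v. apply (is_derive_ext (fun z => v ^ j * f (v * z))); [intros; do 2 f_equal; ring|].
    replace (v ^ S j * f' (u * v)) with (v ^ j * (v * f' (v * u)))
      by (rewrite (Rmult_comm u); simpl; ring).
    apply is_derive_scalR, (is_derive_compR f (fun z => v * z)); [apply Hd | apply is_derive_linR]. }
  unfold moment.
  replace (RInt (fun s => s ^ S j * f' (t * s)) 0 1) with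
      (RInt (fun s => Derive (fun u => s ^ j * f (u * s)) t) 0 1).
  2:{ apply RInt_extR. intros x _. apply is_derive_unique, Hds. }
  apply (is_derive_ext (fun x0 => RInt (fun s => s ^ j * f (x0 * s)) 0 1)).
  { intros x0. apply RInt_extR. intros; do 2 f_equal; ring. }
  apply (is_derive_RInt_param (fun u s => s ^ j * f (u * s)) 0 1 t).
  - apply filter_forall. intros x0 s _. eexists. apply Hds.
  - intros s _. apply (continuity_2d_pt_ext (fun u v => v ^ S j * f' (u * v))).
    { intros. symmetry. apply is_derive_unique, Hds. }
    apply continuity_2d_pt_mult.
    + apply (continuity_1d_2d_pt_comp (fun x => x ^ S j) (fun u v => v)).
      * apply derivable_continuous_pt, derivable_pt_pow.
      * apply continuity_2d_pt_id2.
    + apply (continuity_1d_2d_pt_comp f' (fun u v => u * v)).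
      * apply continuity_pt_filterlim, Hc.
      * apply continuity_2d_pt_mult; [apply continuity_2d_pt_id1 | apply continuity_2d_pt_id2].
  - apply filter_forall. intros y. apply ex_RInt_moment; auto.
Qed.

Lemma moment_parts f f' t : (forall x, is_derive f x (f' x)) -> cont f' ->
  t * moment 3 f' t = f t - 3 * moment 2 f t.
Proof.
  intros Hd Hc.
  assert (Hcf : cont f) by (intros x; apply ex_derive_continuousR; eexists; apply Hd).
  assert (H : RInt (fun s => 3 * (s ^ 2 * f (t * s)) + t * (s ^ 3 * f' (t * s))) 0 1 = f t).
  { rewrite (RInt_deriveR (fun s => s ^ 3 * f (t * s))).
    - rewrite Rmult_1_r. simpl. ring.
    - intros x _.
      replace (3 * (x ^ 2 * f (t * x)) + t * (x ^ 3 * f' (t * x))) with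
        ((INR 3 * x ^ 2) * f (t * x) + x ^ 3 * (t * f' (t * x))) by (simpl; ring).
      apply (is_derive_multR (fun s => s ^ 3) (fun s => f (t * s))).
      + auto_derive; auto. simpl; ring.
      + apply (is_derive_compR f (fun z => t * z)); [apply Hd | apply is_derive_linR].
    - intros x _. apply cont_plus; apply cont_scal, cont_moment_integrand; auto. }
  rewrite RInt_plusR, !RInt_scalR in H by
    (try apply ex_RInt_cont, cont_scal; apply cont_moment_integrand || apply ex_RInt_moment; auto).
  unfold moment. lra.
Qed.

Lemma invLap_0 f : invLap f 0 = 0.
Proof. apply RInt_pointR. Qed.

Section InvLap.

Variable f : R -> R.
Hypothesis Hf : cont f.

Lemma cont_invLap_integrand : cont (fun t => t * moment 2 f t).
Proof. apply cont_mult; [intros x; apply continuous_id | apply cont_moment, Hf]. Qed.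

Lemma is_derive_invLap r : is_derive (invLap f) r (r * moment 2 f r).
Proof.
  apply (is_derive_RInt_from_0 (fun t => t * moment 2 f t)), cont_invLap_integrand.
Qed.

Lemma cont_invLap : cont (invLap f).
Proof. intros r. apply ex_derive_continuousR. eexists. apply is_derive_invLap. Qed.

Lemma invLap_even : even_fun f -> even_fun (invLap f).
Proof.
  intros He r.
  assert (Hc : invLap f (- r) - invLap f r = invLap f (- 0) - invLap f 0).
  { apply (eq_of_is_derive_0 (fun r => invLap f (- r) - invLap f r) 0 r).
    - intros x _.
      apply (is_derive_replace _ _ (- 1 * ((- x) * moment 2 f (- x)) - x * moment 2 f x)).
      { rewrite (moment_even 2 f He x). ring. }
      apply is_derive_minusR; [|apply is_derive_invLap].
      apply (is_derive_compR (invLap f) (fun r => - r)); [apply is_derive_invLap|].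
      auto_derive; auto; ring.
    - intros x _. apply cont_minus; [|apply cont_invLap].
      intros y. apply (continuous_comp (fun r => - r) (invLap f)); [|apply cont_invLap].
      apply ex_derive_continuousR. auto_derive. auto. }
  rewrite Ropp_0 in Hc. lra.
Qed.

Lemma is_derive_const_invLap c r : is_derive (fun y => c + invLap f y) r (r * moment 2 f r).
Proof.
  apply (is_derive_replace _ _ (0 + r * moment 2 f r)); [ring|].
  apply is_derive_plusR; [apply is_derive_constR | apply is_derive_invLap].
Qed.

Lemma Derive_const_invLap c r : Derive (fun y => c + invLap f y) r = r * moment 2 f r.
Proof. apply is_derive_unique, is_derive_const_invLap. Qed.

Lemma radLap_const_invLap c f' r : (forall x, is_derive f x (f' x)) -> cont f' -> r <> 0 ->
  radLap (fun y => c + invLap f y) r = f r.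
Proof.
  intros Hd Hc' Hr. unfold radLap. simpl.
  rewrite (Derive_ext _ (fun x => x * moment 2 f x)) by apply Derive_const_invLap.
  rewrite Derive_const_invLap.
  rewrite (is_derive_unique _ _ (1 * moment 2 f r + r * moment 3 f' r)).
  - rewrite (moment_parts f f' r Hd Hc'). field. auto.
  - apply is_derive_multR; [apply is_derive_idR | apply is_derive_moment; auto].
Qed.

Lemma invLap_kernel r : 0 < r ->
  invLap f r = RInt (fun s => s * (1 - s / r) * f s) 0 r.
Proof.
  intros Hr.
  assert (HcA : cont (fun s => s * f s)) by (apply cont_mult; [intros x; apply continuous_id | auto]).
  assert (HcB : cont (fun s => s ^ 2 * f s)) by (apply cont_mult; [apply cont_pow | auto]).
  set (A := fun t => RInt (fun s => s * f s) 0 t).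
  set (E := fun t => A t - t ^ 2 * moment 2 f t).
  (* [E] is [A t - t ^ -1 * RInt (s ^ 2 * f) 0 t], a primitive of [t * moment 2 f t] on [t > 0]. *)
  assert (HE : forall t, 0 < t -> is_derive E t (t * moment 2 f t)).
  { intros t Ht.
    apply (is_derive_ext_loc (fun t => A t - RInt (fun s => s ^ 2 * f s) 0 t * / t)).
    { exists (mkposreal t Ht). intros y Hy.
      unfold ball in Hy; simpl in Hy; unfold AbsRing_ball, abs, minus, plus, opp in Hy; simpl in Hy.
      apply Rabs_lt_between in Hy.
      unfold E. rewrite <- moment_scale by auto. simpl. field. lra. }
    apply (is_derive_replace _ _
      (t * f t - ((t ^ 2 * f t) * / t + RInt (fun s => s ^ 2 * f s) 0 t * (- 1 / t ^ 2)))).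
    { rewrite <- moment_scale by auto. simpl. field. lra. }
    apply is_derive_minusR; [apply (is_derive_RInt_from_0 (fun s => s * f s)); auto|].
    apply is_derive_multR; [apply (is_derive_RInt_from_0 (fun s => s ^ 2 * f s)); auto|].
    auto_derive; [lra | field; lra]. }
  assert (Hc : invLap f r - E r = invLap f 0 - E 0).
  { apply (eq_of_is_derive_0 (fun t => invLap f t - E t) 0 r).
    - intros x Hx. rewrite Rmin_left, Rmax_right in Hx by lra.
      apply (is_derive_replace _ _ (x * moment 2 f x - x * moment 2 f x)); [ring|].
      apply is_derive_minusR; [apply is_derive_invLap | apply HE; lra].
    - intros x _. apply cont_minus; [apply cont_invLap|].
      apply cont_minus; [|apply cont_mult; [apply cont_pow | apply cont_moment; auto]].
      intros y. apply ex_derive_continuousR. eexists.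
      apply (is_derive_RInt_from_0 (fun s => s * f s)); auto. }
  rewrite invLap_0 in Hc. unfold E, A in Hc. rewrite RInt_pointR in Hc.
  assert (Hkr : invLap f r = RInt (fun s => s * f s) 0 r - / r * RInt (fun s => s ^ 2 * f s) 0 r).
  { rewrite <- (moment_scale f Hf 2 r).
    replace (/ r * (r ^ 3 * moment 2 f r)) with (r ^ 2 * moment 2 f r) by (field; lra).
    simpl in Hc. lra. }
  rewrite Hkr, <- RInt_scalR by (apply ex_RInt_cont, HcB).
  rewrite <- RInt_minusR by (apply ex_RInt_cont; try apply cont_scal; assumption).
  apply RInt_extR. intros. field. lra.
Qed.

Lemma invLap_lipschitz Rr B : (forall s, Rabs s <= Rr -> Rabs (f s) <= B) ->
  forall x y, Rabs x <= Rr -> Rabs y <= Rr -> Rabs (invLap f x - invLap f y) <= Rr * B * Rabs (x - y).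
Proof.
  intros H x y Hx Hy.
  destruct (MVT_gen (invLap f) y x (fun t => t * moment 2 f t)) as [c [Hc Heq]].
  - intros; apply is_derive_invLap.
  - intros; apply continuity_pt_filterlim, cont_invLap.
  - rewrite Heq, Rabs_mult. apply Rmult_le_compat_r; [apply Rabs_pos|].
    assert (Hcr : Rabs c <= Rr).
    { apply Rabs_le_between. apply Rabs_le_between in Hx. apply Rabs_le_between in Hy.
      destruct Hc as [Hc1 Hc2]. split.
      - eapply Rle_trans; [|apply Hc1]. apply Rmin_glb; lra.
      - eapply Rle_trans; [apply Hc2|]. apply Rmax_lub; lra. }
    rewrite Rabs_mult. apply Rmult_le_compat; try apply Rabs_pos; auto.
    apply moment_bound; auto. intros s Hs. apply H. lra.
Qed.

Lemma invLap_bound Rr B : (forall s, Rabs s <= Rr -> Rabs (f s) <= B) ->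
  forall x, Rabs x <= Rr -> Rabs (invLap f x) <= Rr * B * Rr.
Proof.
  intros H x Hx.
  assert (HR : 0 <= Rr) by (eapply Rle_trans; [apply Rabs_pos | exact Hx]).
  assert (HB : 0 <= B) by (eapply Rle_trans; [apply Rabs_pos | apply (H 0); rewrite Rabs_R0; auto]).
  pose proof (invLap_lipschitz Rr B H x 0 Hx) as Hl.
  rewrite Rabs_R0, invLap_0, !Rminus_0_r in Hl.
  eapply Rle_trans; [apply Hl; auto|]. apply Rmult_le_compat_l; nra.
Qed.

End InvLap.

Lemma invLap_ext f g r : (forall s, f s = g s) -> invLap f r = invLap g r.
Proof.
  intros H. unfold invLap. apply RInt_extR. intros. f_equal. apply moment_ext, H.
Qed.

Lemma invLap_plus f g r : cont f -> cont g ->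
  invLap (fun s => f s + g s) r = invLap f r + invLap g r.
Proof.
  intros Hf Hg. unfold invLap.
  rewrite <- RInt_plusR by (apply ex_RInt_cont, cont_invLap_integrand; auto).
  apply RInt_extR. intros. rewrite moment_plus; auto. ring.
Qed.

Lemma invLap_scal f c r : cont f -> invLap (fun s => c * f s) r = c * invLap f r.
Proof.
  intros Hf. unfold invLap.
  rewrite <- RInt_scalR by (apply ex_RInt_cont, cont_invLap_integrand; auto).
  apply RInt_extR. intros. rewrite moment_scal; auto. ring.
Qed.

Lemma invLap_minus f g r : cont f -> cont g ->
  invLap (fun s => f s - g s) r = invLap f r - invLap g r.
Proof.
  intros Hf Hg. rewrite (invLap_ext _ (fun s => f s + (-1) * g s)) by (intros; ring).
  rewrite invLap_plus, invLap_scal; auto; [ring | apply cont_scal; auto].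
Qed.

Lemma invLap_le f g r : cont f -> cont g -> 0 <= r ->
  (forall s, 0 <= s < r -> f s <= g s) -> invLap f r <= invLap g r.
Proof.
  intros Hf Hg Hr H. unfold invLap.
  apply RInt_le; [lra | apply ex_RInt_cont, cont_invLap_integrand; auto
    | apply ex_RInt_cont, cont_invLap_integrand; auto |].
  intros x Hx. apply Rmult_le_compat_l; [lra|].
  apply moment_le; auto; [lra|]. intros s Hs. apply H. lra.
Qed.

Lemma invLap_pow n r : invLap (fun s => s ^ n) r = r ^ (n + 2) / (INR (n + 3) * INR (n + 2)).
Proof.
  unfold invLap. rewrite (RInt_extR _ (fun t => t ^ (n + 1) / INR (n + 3))).
  2:{ intros x _. rewrite moment_pow. replace (2 + n + 1)%nat with (n + 3)%nat by lia.
      rewrite pow_add. simpl. field. apply not_0_INR. lia. }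
  rewrite (RInt_deriveR (fun s => s ^ (n + 2) / (INR (n + 3) * INR (n + 2)))).
  - rewrite pow_i by lia. field. split; apply not_0_INR; lia.
  - intros x _. auto_derive; auto. replace (pred (n + 2)) with (n + 1)%nat by lia.
    field. split; apply not_0_INR; lia.
  - intros x _. apply ex_derive_continuousR. auto_derive. auto.
Qed.

Lemma invLap_const c r : invLap (fun _ => c) r = c * r ^ 2 / 6.
Proof.
  rewrite (invLap_ext _ (fun s => c * s ^ 0)) by (intros; simpl; ring).
  rewrite invLap_scal, invLap_pow by apply cont_pow. simpl. field.
Qed.

Lemma invLap_ge_0 f r : cont f -> 0 <= r -> (forall s, 0 <= s < r -> 0 <= f s) -> 0 <= invLap f r.
Proof.
  intros Hf Hr H. replace 0 with (invLap (fun _ => 0) r) by (rewrite invLap_const; field).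
  apply invLap_le; auto. apply cont_const.
Qed.

Lemma invLap_le_0 f r : cont f -> 0 <= r -> (forall s, 0 <= s < r -> f s <= 0) -> invLap f r <= 0.
Proof.
  intros Hf Hr H. replace 0 with (invLap (fun _ => 0) r) by (rewrite invLap_const; field).
  apply invLap_le; auto. apply cont_const.
Qed.

Lemma invLap_quad a b r : invLap (fun s => a + b * s ^ 2) r = a * r ^ 2 / 6 + b * r ^ 4 / 20.
Proof.
  rewrite invLap_plus by (try apply cont_const; apply cont_scal, cont_pow).
  rewrite invLap_const, invLap_scal, invLap_pow by apply cont_pow. simpl. field.
Qed.

Lemma invLap_quart a b r :
  invLap (fun s => a * s ^ 2 + b * s ^ 4) r = a * r ^ 4 / 20 + b * r ^ 6 / 42.
Proof.
  rewrite invLap_plus by (apply cont_scal, cont_pow).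
  rewrite !invLap_scal, !invLap_pow by apply cont_pow. simpl. field.
Qed.

Lemma invLap_ge_on_interval f r1 p q m : cont f -> (forall s, 0 <= s <= r1 -> 0 <= f s) ->
  0 <= p -> p <= q -> q < r1 -> 0 <= m -> (forall s, p <= s <= q -> m <= f s) ->
  p * (1 - q / r1) * m * (q - p) <= invLap f r1.
Proof.
  intros Hf H0 Hp Hpq Hq Hm Hmf.
  assert (Hr1 : 0 < r1) by lra.
  rewrite invLap_kernel by auto.
  set (F := fun s => s * (1 - s / r1) * f s).
  assert (HcF : cont F).
  { apply cont_mult; auto. apply cont_mult; [intros x; apply continuous_id|].
    apply cont_minus; [apply cont_const|]. intros x. apply ex_derive_continuousR. auto_derive. lra. }
  assert (HF0 : forall s, 0 <= s <= r1 -> 0 <= F s).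
  { intros s Hs. unfold F. apply Rmult_le_pos; [apply Rmult_le_pos|]; [lra | | apply H0; lra].
    assert (s / r1 <= 1) by (apply Rdiv_le_of_le_mult; lra). lra. }
  assert (Hq1 : 0 <= 1 - q / r1) by (assert (q / r1 <= 1) by (apply Rdiv_le_of_le_mult; lra); lra).
  rewrite <- (RInt_ChaslesR F 0 p r1), <- (RInt_ChaslesR F p q r1) by (apply ex_RInt_cont; auto).
  assert (Hleft : 0 <= RInt F 0 p)
    by (apply RInt_ge_0; [lra | apply ex_RInt_cont; auto | intros; apply HF0; lra]).
  assert (Hright : 0 <= RInt F q r1)
    by (apply RInt_ge_0; [lra | apply ex_RInt_cont; auto | intros; apply HF0; lra]).
  assert (Hmid : RInt (fun _ => p * (1 - q / r1) * m) p q <= RInt F p q).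
  { apply RInt_le; [lra | apply ex_RInt_cont, cont_const | apply ex_RInt_cont; auto |].
    intros s Hs. unfold F.
    assert (1 - q / r1 <= 1 - s / r1).
    { unfold Rdiv. apply Rplus_le_compat_l, Ropp_le_contravar, Rmult_le_compat_r; [|lra].
      apply Rlt_le, Rinv_0_lt_compat; lra. }
    apply Rmult_le_compat; [apply Rmult_le_pos; lra | lra | | apply Hmf; lra].
    apply Rmult_le_compat; lra. }
  rewrite RInt_constR in Hmid. lra.
Qed.

(** * Smoothness *)

Fixpoint Cn (n : nat) (f : R -> R) : Prop :=
  match n with
  | O => cont f
  | S m => exists g, (forall x, is_derive f x (g x)) /\ Cn m g
  end.

Lemma Cn_cont n f : Cn n f -> cont f.
Proof.
  destruct n; simpl; auto. intros [g [Hd _]] x. apply ex_derive_continuousR. eexists; apply Hd.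
Qed.

Lemma Cn_S n f : Cn (S n) f -> Cn n f.
Proof.
  revert f. induction n; intros f H.
  - apply (Cn_cont 1), H.
  - destruct H as [g [Hd Hg]]. exists g. auto.
Qed.

Lemma Cn_ext n f g : (forall x, f x = g x) -> Cn n f -> Cn n g.
Proof.
  destruct n; simpl.
  - intros H Hf x. apply (continuous_ext f); auto.
  - intros H [h [Hd Hh]]. exists h. split; auto. intros x. apply (is_derive_ext f); auto.
Qed.

Lemma Cn_const n c : Cn n (fun _ => c).
Proof.
  revert c. induction n; intros c; simpl; [apply cont_const|].
  exists (fun _ => 0). split; [intros; apply is_derive_constR | apply IHn].
Qed.

Lemma Cn_plus n : forall f g, Cn n f -> Cn n g -> Cn n (fun x => f x + g x).
Proof.
  induction n; simpl; intros f g Hf Hg; [apply cont_plus; auto|].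
  destruct Hf as [f' [Hf Hf']], Hg as [g' [Hg Hg']].
  exists (fun x => f' x + g' x). split; auto. intros; apply is_derive_plusR; auto.
Qed.

Lemma Cn_mult n : forall f g, Cn n f -> Cn n g -> Cn n (fun x => f x * g x).
Proof.
  induction n; intros f g Hf Hg; [apply cont_mult; auto|].
  pose proof (Cn_S _ _ Hf) as Hf0. pose proof (Cn_S _ _ Hg) as Hg0.
  destruct Hf as [f' [Hf Hf']], Hg as [g' [Hg Hg']].
  exists (fun x => f' x * g x + f x * g' x). split.
  - intros; apply is_derive_multR; auto.
  - apply Cn_plus; apply IHn; auto.
Qed.

Lemma Cn_id n : Cn n (fun x => x).
Proof.
  destruct n; simpl; [intros x; apply continuous_id|].
  exists (fun _ => 1). split; [intros; apply is_derive_idR | apply Cn_const].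
Qed.

Lemma Cn_inv n : forall f, (forall x, f x <> 0) -> Cn n f -> Cn n (fun x => / f x).
Proof.
  induction n; intros f Hnz Hf; [apply cont_inv; auto|].
  pose proof (Cn_S _ _ Hf) as Hf0. destruct Hf as [f' [Hd Hf']].
  exists (fun x => -1 * (f' x * (/ f x * / f x))). split.
  - intros x. apply (is_derive_replace _ _ (- f' x / f x ^ 2)); [field; auto|].
    apply is_derive_inv; auto.
  - apply Cn_mult; [apply Cn_const|]. apply Cn_mult; auto. apply Cn_mult; apply IHn; auto.
Qed.

Lemma Cn_moment n : forall f j, Cn n f -> Cn n (moment j f).
Proof.
  induction n; intros f j Hf; [apply cont_moment; auto|].
  destruct Hf as [f' [Hd Hf']]. exists (moment (S j) f'). split; auto.
  intros; apply is_derive_moment; auto. apply Cn_cont with n; auto.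
Qed.

Lemma Cn_invLap n f : Cn n f -> Cn (S n) (invLap f).
Proof.
  intros Hf. exists (fun t => t * moment 2 f t). split.
  - intros; apply is_derive_invLap. apply Cn_cont with n; auto.
  - apply Cn_mult; [apply Cn_id | apply Cn_moment; auto].
Qed.

Lemma smooth_Cn f : (forall n, Cn n f) -> smooth f.
Proof.
  intros H n x. destruct n; [simpl; auto|].
  specialize (H (S n)). revert f H x. induction n; intros f H x.
  - destruct H as [g [Hd _]]. simpl. eexists. apply Hd.
  - destruct H as [g [Hd Hg]].
    assert (Hfg : forall y, Derive_n f (S n) y = Derive_n g n y).
    { intros y. replace (S n) with (n + 1)%nat by lia. rewrite <- (Derive_n_comp f n 1).
      apply Derive_n_ext. intros z. simpl. apply is_derive_unique, Hd. }
    simpl ex_derive_n. apply (ex_derive_ext (Derive_n g n)); [intros t; symmetry; apply Hfg|].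
    apply (IHn g Hg x).
Qed.

Lemma smooth_cont f : smooth f -> cont f.
Proof. intros Hf x. apply ex_derive_continuousR, (Hf 1%nat x). Qed.

Lemma radLap_ext f g r : (forall x, f x = g x) -> radLap f r = radLap g r.
Proof.
  intros H. unfold radLap. rewrite (Derive_ext f g), (Derive_n_ext f g) by auto. auto.
Qed.

Section RadialProfile.

Variables w h : R -> R.
Hypotheses (Hw : smooth w) (Hew : even_fun w) (Hh : cont h) (Heh : even_fun h).
Hypotheses (Hrad : forall r, 0 < r -> radLap w r = h r) (Hw0 : Derive w 0 = 0).

(* [(r ^ 2 w')' = r ^ 2 radLap w = r ^ 2 h], integrated from [0]. *)
Lemma radial_profile_Derive r : 0 <= r -> Derive w r = r * moment 2 h r.
Proof.
  intros Hr. destruct (Req_dec r 0) as [->|Hne]; [rewrite Hw0; ring|].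
  assert (Hd1 : forall x, ex_derive w x) by (intros x; exact (Hw 1%nat x)).
  assert (Hd2 : forall x, ex_derive (Derive w) x).
  { intros x. apply (ex_derive_ext (Derive (fun x => w x))); [intros; apply Derive_ext; auto|].
    exact (Hw 2%nat x). }
  assert (HcB : cont (fun s => s ^ 2 * h s)) by (apply cont_mult; [apply cont_pow | auto]).
  set (psi := fun t => t ^ 2 * Derive w t - RInt (fun s => s ^ 2 * h s) 0 t).
  assert (Hpsi : psi r = psi 0).
  { apply eq_of_is_derive_0.
    - intros x Hx. rewrite Rmin_left, Rmax_right in Hx by lra.
      apply (is_derive_replace _ _ ((2 * x * Derive w x + x ^ 2 * Derive_n w 2 x) - x ^ 2 * h x)).
      { rewrite <- (Hrad x) by lra. unfold radLap. field. lra. }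
      apply is_derive_minusR; [|apply (is_derive_RInt_from_0 (fun s => s ^ 2 * h s)); auto].
      apply is_derive_multR; [auto_derive; auto; ring | apply Derive_correct; auto].
    - intros x _. apply cont_minus.
      + apply cont_mult; [apply cont_pow|]. intros y. apply ex_derive_continuousR; auto.
      + intros y. apply ex_derive_continuousR. eexists.
        apply (is_derive_RInt_from_0 (fun s => s ^ 2 * h s)); auto. }
  unfold psi in Hpsi. rewrite RInt_pointR, <- moment_scale in Hpsi by auto.
  apply Rmult_eq_reg_l with (r ^ 2); [|apply pow_nonzero; auto].
  simpl in *. lra.
Qed.

Lemma radial_profile_invLap r : w r = w 0 + invLap h r.
Proof.
  assert (Hpos : forall r, 0 <= r -> w r = w 0 + invLap h r).
  { intros r0 Hr.
    assert (H : w r0 - invLap h r0 = w 0 - invLap h 0).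
    { apply (eq_of_is_derive_0 (fun t => w t - invLap h t) 0 r0).
      - intros x Hx. rewrite Rmin_left, Rmax_right in Hx by lra.
        apply (is_derive_replace _ _ (Derive w x - x * moment 2 h x)).
        { rewrite radial_profile_Derive; [ring | lra]. }
        apply is_derive_minusR; [apply Derive_correct, (Hw 1%nat) | apply is_derive_invLap; auto].
      - intros x _. apply cont_minus; [apply smooth_cont; auto | apply cont_invLap; auto]. }
    rewrite invLap_0 in H. lra. }
  destruct (Rle_dec 0 r); [apply Hpos; auto|].
  rewrite <- Hew, <- (invLap_even h Hh Heh r). apply Hpos. lra.
Qed.

End RadialProfile.

(** * The integral formulation of (P) *)

Definition force (u : R -> R) (s : R) : R := - / (u s ^ 3).

(* For a solution of (P), [bilap u], [lap eps u] and [picard k eps u] are [Δ²u], [Δu] and [u],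
   each recovered from its Laplacian by [invLap] and its value at [0]. *)
Definition bilap (u : R -> R) (t : R) : R := 1 + invLap (force u) t.
Definition lap (eps : R) (u : R -> R) (s : R) : R := - eps + invLap (bilap u) s.
Definition picard (k eps : R) (u : R -> R) (r : R) : R := k + invLap (lap eps u) r.

Record int_sol (k eps : R) (u : R -> R) : Prop := {
  int_sol_cont : cont u;
  int_sol_even : even_fun u;
  int_sol_pos : forall r, 0 < u r;
  int_sol_fix : forall r, u r = picard k eps u r }.

Lemma force_even u : even_fun u -> even_fun (force u).
Proof. intros He r. unfold force. rewrite He. auto. Qed.

Lemma force_le u1 u2 s : 0 < u2 s -> u2 s <= u1 s -> force u2 s <= force u1 s.
Proof.
  intros H0 H. unfold force. apply Ropp_le_contravar, Rinv_le_contravar.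
  - apply pow_lt; auto.
  - apply pow_incr; lra.
Qed.

Lemma Cn_force n u : (forall r, 0 < u r) -> Cn n u -> Cn n (force u).
Proof.
  intros Hp Hu. unfold force.
  apply (Cn_ext n (fun s => -1 * / (u s * (u s * u s)))).
  { intros. simpl. field. specialize (Hp x). lra. }
  apply Cn_mult; [apply Cn_const|]. apply Cn_inv.
  - intros x. specialize (Hp x). apply Rgt_not_eq. repeat apply Rmult_lt_0_compat; lra.
  - apply Cn_mult; auto. apply Cn_mult; auto.
Qed.

Section PositiveProfile.

Variable u : R -> R.
Hypotheses (Hu : cont u) (Hpos : forall r, 0 < u r).

Lemma cont_force : cont (force u).
Proof. apply (Cn_force 0); auto. Qed.

Lemma force_lt_0 s : force u s < 0.
Proof.
  unfold force. assert (0 < / u s ^ 3) by (apply Rinv_0_lt_compat, pow_lt, Hpos). lra.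
Qed.

Lemma cont_bilap : cont (bilap u).
Proof. apply cont_plus; [apply cont_const | apply cont_invLap, cont_force]. Qed.

Lemma cont_lap eps : cont (lap eps u).
Proof. apply cont_plus; [apply cont_const | apply cont_invLap, cont_bilap]. Qed.

Lemma cont_picard k eps : cont (picard k eps u).
Proof. apply cont_plus; [apply cont_const | apply cont_invLap, cont_lap]. Qed.

Section Even.

Hypothesis He : even_fun u.

Lemma bilap_even : even_fun (bilap u).
Proof.
  intros t. unfold bilap. f_equal. apply invLap_even; [apply cont_force | apply force_even, He].
Qed.

Lemma lap_even eps : even_fun (lap eps u).
Proof. intros s. unfold lap. f_equal. apply invLap_even; [apply cont_bilap | apply bilap_even]. Qed.

Lemma picard_even k eps : even_fun (picard k eps u).
Proof. intros r. unfold picard. f_equal. apply invLap_even; [apply cont_lap | apply lap_even]. Qed.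

End Even.

Lemma bilap_le_1 t : 0 <= t -> bilap u t <= 1.
Proof.
  intros Ht. unfold bilap.
  assert (invLap (force u) t <= 0).
  { apply invLap_le_0; auto; [apply cont_force|]. intros; apply Rlt_le, force_lt_0. }
  lra.
Qed.

Lemma lap_le eps s : 0 <= s -> lap eps u s <= - eps + s ^ 2 / 6.
Proof.
  intros Hs. unfold lap.
  replace (s ^ 2 / 6) with (invLap (fun _ => 1) s) by (rewrite invLap_const; field).
  apply Rplus_le_compat_l, invLap_le; auto; [apply cont_bilap | apply cont_const|].
  intros t Ht. apply bilap_le_1. lra.
Qed.

Lemma picard_le k eps r : 0 <= r -> picard k eps u r <= k - eps * r ^ 2 / 6 + r ^ 4 / 120.
Proof.
  intros Hr. unfold picard.
  assert (invLap (lap eps u) r <= invLap (fun s => - eps + / 6 * s ^ 2) r).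
  { apply invLap_le; auto;
      [apply cont_lap | apply cont_plus; [apply cont_const | apply cont_scal, cont_pow]|].
    intros s Hs. replace (- eps + / 6 * s ^ 2) with (- eps + s ^ 2 / 6) by field. apply lap_le. lra. }
  rewrite invLap_quad in H. lra.
Qed.

Lemma bilap_decr a b : 0 <= a -> a <= b -> bilap u b <= bilap u a.
Proof.
  intros Ha Hab.
  destruct (MVT_gen (bilap u) a b (fun t => t * moment 2 (force u) t)) as [c [Hc Heq]].
  - intros; apply is_derive_const_invLap, cont_force.
  - intros; apply continuity_pt_filterlim, cont_bilap.
  - rewrite Rmin_left, Rmax_right in Hc by lra.
    assert (c * moment 2 (force u) c <= 0).
    { destruct (Req_dec c 0) as [->|Hne]; [lra|].
      assert (moment 2 (force u) c <= 0).
      { apply moment_le_0; [apply cont_force | lra |]. intros; apply Rlt_le, force_lt_0. }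
      nra. }
    nra.
Qed.

Lemma picard_growth k eps R0 s C : 0 <= eps -> 0 <= R0 -> R0 <= s -> s ^ 3 / 30 <= C ->
  picard k eps u s <= picard k eps u R0 + C * (s - R0).
Proof.
  intros He H0 Hs HC.
  destruct (MVT_gen (picard k eps u) R0 s (fun t => t * moment 2 (lap eps u) t)) as [c [Hc Heq]].
  - intros; apply is_derive_const_invLap, cont_lap.
  - intros; apply continuity_pt_filterlim, cont_picard.
  - rewrite Rmin_left, Rmax_right in Hc by lra.
    assert (c * moment 2 (lap eps u) c <= C).
    { destruct (Req_dec c 0) as [->|Hne].
      - assert (0 <= s ^ 3) by (apply pow_le; lra). lra.
      - assert (moment 2 (lap eps u) c <= moment 2 (fun s => / 6 * s ^ 2) c).
        { apply moment_le; [apply cont_lap | apply cont_scal, cont_pow | lra |].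
          intros y Hy. pose proof (lap_le eps y (proj1 Hy)). lra. }
        rewrite moment_scal, moment_pow in H by apply cont_pow. simpl INR in H.
        assert (c ^ 3 <= s ^ 3) by (apply pow_incr; lra).
        simpl in *. nra. }
    nra.
Qed.

End PositiveProfile.

Section Regularity.

Variables (k eps : R) (u : R -> R).
Hypothesis Hs : int_sol k eps u.

Lemma int_sol_Cn n : Cn n u.
Proof.
  destruct Hs as [Hc He Hp Hfix].
  induction n; [exact Hc|].
  apply Cn_S, Cn_S, (Cn_ext _ (picard k eps u)); [intros; symmetry; auto|].
  apply Cn_plus; [apply Cn_const|]. apply Cn_invLap.
  apply Cn_plus; [apply Cn_const|]. apply Cn_invLap.
  apply Cn_plus; [apply Cn_const|]. apply Cn_invLap.
  apply Cn_force; auto.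
Qed.

Lemma Cn_bilap n : Cn n (bilap u).
Proof.
  apply Cn_S, Cn_plus; [apply Cn_const|]. apply Cn_invLap, Cn_force; [apply Hs | apply int_sol_Cn].
Qed.

Lemma Cn_lap n : Cn n (lap eps u).
Proof. apply Cn_S, Cn_plus; [apply Cn_const|]. apply Cn_invLap, Cn_bilap. Qed.

End Regularity.

Lemma radLap_invLap_Cn c f r : Cn 1 f -> r <> 0 -> radLap (fun y => c + invLap f y) r = f r.
Proof.
  intros Hf Hr. pose proof (Cn_cont 1 f Hf) as Hcf. destruct Hf as [f' [Hd Hc]].
  apply radLap_const_invLap with f'; auto.
Qed.

Lemma int_sol_radial_sol k eps u : int_sol k eps u -> has_pos_entire_radial_sol k eps.
Proof.
  intros Hs. pose proof Hs as [Hc He Hp Hfix].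
  exists u, (lap eps u), (bilap u).
  refine (conj (conj _ _) (conj (conj _ _) (conj (conj _ _) (conj _ (conj _ (conj _ (conj _
    (conj _ (conj _ (conj _ (conj _ (conj _ _)))))))))))).
  - apply smooth_Cn, (int_sol_Cn k eps u Hs).
  - exact He.
  - apply smooth_Cn, (Cn_lap k eps u Hs).
  - apply lap_even; auto.
  - apply smooth_Cn, (Cn_bilap k eps u Hs).
  - apply bilap_even; auto.
  - exact Hp.
  - intros r Hr. rewrite (radLap_ext _ (picard k eps u)) by auto.
    apply (radLap_invLap_Cn k (lap eps u)); [apply (Cn_lap k eps u Hs) | lra].
  - intros r Hr. apply (radLap_invLap_Cn (- eps) (bilap u)); [apply (Cn_bilap k eps u Hs) | lra].
  - intros r Hr. apply (radLap_invLap_Cn 1 (force u)); [|lra].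
    apply Cn_force; auto. apply (int_sol_Cn k eps u Hs).
  - rewrite Hfix. unfold picard. rewrite invLap_0. ring.
  - unfold lap. rewrite invLap_0. ring.
  - unfold bilap. rewrite invLap_0. ring.
  - rewrite (Derive_ext _ (picard k eps u)) by auto.
    unfold picard. rewrite Derive_const_invLap; [ring | apply cont_lap; auto].
  - unfold lap. rewrite Derive_const_invLap; [ring | apply cont_bilap; auto].
  - unfold bilap. rewrite Derive_const_invLap; [ring | apply cont_force; auto].
Qed.

Lemma radial_sol_int_sol k eps : has_pos_entire_radial_sol k eps -> exists u, int_sol k eps u.
Proof.
  intros (u & v & w & [Hsu Heu] & [Hsv Hev] & [Hsw Hew] & Hp & Hu & Hv & Hw & Hu0 & Hv0 & Hw0
          & Hdu & Hdv & Hdw).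
  assert (Hcu : cont u) by (apply smooth_cont; auto).
  assert (HW : forall r, w r = bilap u r).
  { intros r. rewrite (radial_profile_invLap w (force u)), Hw0; auto.
    - apply cont_force; auto.
    - apply force_even; auto. }
  assert (HV : forall r, v r = lap eps u r).
  { intros r. rewrite (radial_profile_invLap v w), Hv0; auto; [|apply smooth_cont; auto].
    unfold lap. f_equal. apply invLap_ext, HW. }
  exists u. constructor; [exact Hcu | exact Heu | exact Hp | intros r].
  rewrite (radial_profile_invLap u v), Hu0; auto; [|apply smooth_cont; auto].
  unfold picard. f_equal. apply invLap_ext, HV.
Qed.

Lemma int_sol_eps_bound k eps u : int_sol k eps u -> 0 < eps -> eps * eps < 6 * k / 5.
Proof.
  intros [Hc He Hp Hfix] Heps.
  set (r := sqrt (10 * eps)).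
  assert (Hr2 : r ^ 2 = 10 * eps) by (unfold r; rewrite <- Rsqr_pow2, Rsqr_sqrt; lra).
  assert (Hr : 0 <= r) by apply sqrt_pos.
  pose proof (picard_le u Hc Hp k eps r Hr) as H. rewrite <- Hfix in H. pose proof (Hp r).
  replace (r ^ 4) with ((r ^ 2) ^ 2) in H by ring. rewrite Hr2 in H. nra.
Qed.

(** * A priori lower bound *)

(* [growth_const Rr] bounds the slope of a solution on [[0, Rr + 3]] ([picard_growth]);
   [lower_const k Rr] is the threshold below which the drop of [Δ²u] given by
   [int_sol_bilap_drop] exceeds [3 k + 30]. *)
Definition growth_const (Rr : R) : R := 1 + (Rr + 3) ^ 3 / 30.
Definition lower_const (k Rr : R) : R := / (27 * growth_const Rr ^ 2 * (Rr + 2) * (3 * k + 30)).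

Lemma growth_const_ge_1 Rr : 0 <= Rr -> 1 <= growth_const Rr.
Proof. intros HR. unfold growth_const. assert (0 < (Rr + 3) ^ 3) by (apply pow_lt; lra). lra. Qed.

Lemma lower_const_pos k Rr : 0 < k -> 0 <= Rr -> 0 < lower_const k Rr.
Proof.
  intros Hk HR. pose proof (growth_const_ge_1 Rr HR). unfold lower_const.
  apply Rinv_0_lt_compat. assert (0 < growth_const Rr ^ 2) by (apply pow_lt; lra).
  repeat apply Rmult_lt_0_compat; lra.
Qed.

Lemma int_sol_le_near k eps u Rr R0 s : int_sol k eps u -> 0 <= eps -> 0 <= R0 <= Rr ->
  u R0 <= 1 -> R0 <= s <= R0 + 2 * (u R0 / growth_const Rr) -> u s <= 3 * u R0.
Proof.
  intros [Hc _ Hp Hfix] He HR0 Hsmall Hs.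
  set (C := growth_const Rr) in *. assert (HC : 1 <= C) by (apply growth_const_ge_1; lra).
  assert (Ha : u R0 / C <= u R0) by (apply Rdiv_le_of_le_mult; [lra | pose proof (Hp R0); nra]).
  rewrite (Hfix s).
  replace (3 * u R0) with (picard k eps u R0 + C * (2 * (u R0 / C)))
    by (rewrite <- Hfix; field; lra).
  eapply Rle_trans; [apply (picard_growth u Hc Hp k eps R0 s C); try lra|].
  - assert (s ^ 3 <= (Rr + 3) ^ 3) by (apply pow_incr; lra). unfold C, growth_const. lra.
  - apply Rplus_le_compat_l, Rmult_le_compat_l; lra.
Qed.

(* If [u] is tiny at [R0], it stays below [3 * u R0] on an interval of length
   [u R0 / growth_const Rr] ([int_sol_le_near]), where [/ u ^ 3] is therefore huge; by the
   kernel formula ([invLap_ge_on_interval]) this pushes [Δ²u] far below [1] at [R0 + 2]. *)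
Lemma int_sol_bilap_drop k eps u Rr R0 : int_sol k eps u -> 0 <= eps -> 0 <= R0 <= Rr ->
  u R0 < / 60 -> bilap u (R0 + 2) <= 1 - / (27 * growth_const Rr ^ 2 * (Rr + 2) * u R0).
Proof.
  intros Hs He HR0 Hsmall. pose proof Hs as [Hc _ Hp _].
  set (eta := u R0) in *. assert (Heta : 0 < eta) by apply Hp.
  set (C := growth_const Rr). assert (HC : 1 <= C) by (apply growth_const_ge_1; lra).
  set (a := eta / C).
  assert (Ha : 0 < a <= eta).
  { unfold a. split; [apply Rdiv_lt_0_compat; lra | apply Rdiv_le_of_le_mult; nra]. }
  set (p := R0 + a). set (q := R0 + 2 * a). set (r1 := R0 + 2).
  set (m := / (27 * eta ^ 3)).
  assert (Hm : 0 < m) by (apply Rinv_0_lt_compat, Rmult_lt_0_compat, pow_lt; lra).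
  assert (Hu3 : forall s, p <= s <= q -> u s <= 3 * eta).
  { intros s Hs'. apply (int_sol_le_near k eps u Rr R0 s); auto;
      [fold eta; lra | fold eta C; unfold p, q, a in *; lra]. }
  set (H := fun s => -1 * force u s).
  assert (HH : forall s, H s = / u s ^ 3) by (intros; unfold H, force; ring).
  assert (Hint : p * (1 - q / r1) * m * (q - p) <= invLap H r1).
  { apply invLap_ge_on_interval; unfold p, q, r1 in *; try lra.
    - apply cont_scal, cont_force; auto.
    - intros s _. rewrite HH. apply Rlt_le, Rinv_0_lt_compat, pow_lt, Hp.
    - intros s Hs'. rewrite HH. apply Rinv_le_contravar; [apply pow_lt, Hp|].
      replace (27 * eta ^ 3) with ((3 * eta) ^ 3) by ring.
      apply pow_incr. split; [apply Rlt_le, Hp | apply Hu3; auto]. }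
  assert (Hfac : / (Rr + 2) <= 1 - q / r1).
  { replace (1 - q / r1) with ((r1 - q) * / r1) by (field; unfold r1; lra).
    rewrite <- (Rmult_1_l (/ (Rr + 2))).
    apply Rmult_le_compat; [lra | apply Rlt_le, Rinv_0_lt_compat; lra | unfold r1, q; lra |].
    apply Rinv_le_contravar; unfold r1; lra. }
  assert (Hlow : a * / (Rr + 2) * m * a <= p * (1 - q / r1) * m * (q - p)).
  { replace (q - p) with a by (unfold p, q; ring).
    apply Rmult_le_compat_r; [lra|]. apply Rmult_le_compat_r; [lra|].
    apply Rmult_le_compat; [lra | apply Rlt_le, Rinv_0_lt_compat; lra | unfold p; lra | exact Hfac]. }
  assert (HM : a * / (Rr + 2) * m * a = / (27 * C ^ 2 * (Rr + 2) * eta)).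
  { unfold a, m. field. repeat split; lra. }
  unfold bilap. rewrite (invLap_ext (force u) (fun s => -1 * H s)) by (intros; unfold H; ring).
  rewrite invLap_scal by (apply cont_scal, cont_force; auto).
  fold r1. fold C. lra.
Qed.

Section QuadraticBarrier.

Variables (u : R -> R) (A M : R).
Hypotheses (Hu : cont u) (Hpos : forall r, 0 < u r) (HA : 0 < A) (HM : 0 <= M).
Hypothesis Hdrop : bilap u A <= 1 - M.

Lemma bilap_quadratic_bound s : 0 <= s <= 3 * A ->
  bilap u s <= (1 + M / 8) - M / (8 * A ^ 2) * s ^ 2.
Proof.
  intros Hs. assert (HA2 : 0 < A ^ 2) by (apply pow_lt; lra).
  replace (M / (8 * A ^ 2) * s ^ 2) with (M / 8 * (s ^ 2 / A ^ 2)) by (field; lra).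
  destruct (Rle_dec s A).
  - assert (s ^ 2 / A ^ 2 <= 1)
      by (apply Rdiv_le_of_le_mult; [lra|]; rewrite Rmult_1_l; apply pow_incr; lra).
    pose proof (bilap_le_1 u Hu Hpos s (proj1 Hs)). nra.
  - assert (s ^ 2 / A ^ 2 <= 9).
    { apply Rdiv_le_of_le_mult; [lra|]. replace (9 * A ^ 2) with ((3 * A) ^ 2) by ring.
      apply pow_incr; lra. }
    pose proof (bilap_decr u Hu Hpos A s ltac:(lra) ltac:(lra)). nra.
Qed.

Lemma picard_triple_bound k eps : 0 <= eps ->
  picard k eps u (3 * A) <= k + A ^ 4 * (81 / 120 - M * 162 / 6720).
Proof.
  intros He.
  set (al := 1 + M / 8). set (be := - (M / (8 * A ^ 2))).
  assert (Hlap : forall s, 0 <= s <= 3 * A -> lap eps u s <= al / 6 * s ^ 2 + be / 20 * s ^ 4).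
  { intros s Hs. unfold lap.
    replace (al / 6 * s ^ 2 + be / 20 * s ^ 4) with (invLap (fun t => al + be * t ^ 2) s)
      by (rewrite invLap_quad; field).
    assert (invLap (bilap u) s <= invLap (fun t => al + be * t ^ 2) s).
    { apply invLap_le; [apply cont_bilap; auto | | lra |].
      - apply cont_plus; [apply cont_const | apply cont_scal, cont_pow].
      - intros t Ht. unfold al, be. rewrite bilap_quadratic_bound by lra. lra. }
    lra. }
  unfold picard. apply Rplus_le_compat_l.
  replace (A ^ 4 * (81 / 120 - M * 162 / 6720))
    with (invLap (fun s => al / 6 * s ^ 2 + be / 20 * s ^ 4) (3 * A))
    by (rewrite invLap_quart; unfold al, be; field; lra).
  apply invLap_le; [apply cont_lap; auto | | lra |].
  - apply cont_plus; apply cont_scal, cont_pow.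
  - intros s Hs. apply Hlap. lra.
Qed.

End QuadraticBarrier.

(* Otherwise [Δ²u] drops by more than [3 k + 30] at [R0 + 2], which forces
   [u (3 (R0 + 2)) < 0]. *)
Lemma int_sol_lower_bound k eps u Rr : int_sol k eps u -> 0 <= eps -> 0 < k -> 0 <= Rr ->
  forall r, Rabs r <= Rr -> lower_const k Rr <= u r.
Proof.
  intros Hs He Hk HR.
  assert (Hpos : forall R0, 0 <= R0 <= Rr -> lower_const k Rr <= u R0).
  2:{ intros r Hr. destruct (Rle_dec 0 r).
      - apply Hpos. rewrite Rabs_right in Hr; lra.
      - rewrite <- (int_sol_even _ _ _ Hs). apply Hpos. rewrite Rabs_left in Hr; lra. }
  intros R0 HR0. apply Rnot_lt_le. intros Hlt.
  pose proof Hs as [Hc _ Hp Hfix].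
  set (eta := u R0) in *. assert (Heta : 0 < eta) by apply Hp.
  set (C := growth_const Rr). assert (HC : 1 <= C) by (apply growth_const_ge_1; lra).
  set (D := 27 * C ^ 2 * (Rr + 2)).
  assert (HD : 54 <= D) by (unfold D; assert (1 <= C ^ 2) by nra; nra).
  assert (Hsmall : eta * (D * (3 * k + 30)) < 1).
  { unfold lower_const in Hlt. fold C D in Hlt.
    apply Rmult_lt_compat_r with (r := D * (3 * k + 30)) in Hlt; [|nra].
    rewrite Rinv_l in Hlt by nra. exact Hlt. }
  set (M := / (D * eta)).
  assert (HM : 3 * k + 30 < M).
  { unfold M. apply Rmult_lt_reg_r with (D * eta); [nra|]. rewrite Rinv_l by nra. nra. }
  assert (Hdrop : bilap u (R0 + 2) <= 1 - M).
  { apply (int_sol_bilap_drop k eps u Rr R0); [exact Hs | exact He | exact HR0 |].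
    assert (60 <= D * (3 * k + 30)) by nra.
    apply Rmult_lt_reg_r with 60; [lra|]. rewrite Rinv_l by lra. fold eta. nra. }
  pose proof (picard_triple_bound u (R0 + 2) M Hc Hp ltac:(lra) ltac:(lra) Hdrop k eps He) as Htr.
  rewrite <- Hfix in Htr. pose proof (Hp (3 * (R0 + 2))).
  assert (16 <= (R0 + 2) ^ 4) by (replace 16 with (2 ^ 4) by ring; apply pow_incr; lra).
  nra.
Qed.

(** * Comparison and passage to the limit *)

Lemma lap_gap e1 e2 u1 u2 T : cont u1 -> cont u2 -> (forall r, 0 < u1 r) -> (forall r, 0 < u2 r) ->
  (forall s, 0 <= s < T -> u2 s <= u1 s) ->
  forall t, 0 <= t <= T -> e2 - e1 <= lap e1 u1 t - lap e2 u2 t.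
Proof.
  intros Hc1 Hc2 Hp1 Hp2 Hle t Ht.
  assert (Hbi : forall t, 0 <= t <= T -> bilap u2 t <= bilap u1 t).
  { intros t' Ht'.
    apply Rplus_le_compat_l, invLap_le; [apply cont_force; auto | apply cont_force; auto | lra |].
    intros s Hs. apply force_le; auto. apply Hle. lra. }
  assert (invLap (bilap u2) t <= invLap (bilap u1) t).
  { apply invLap_le; [apply cont_bilap; auto | apply cont_bilap; auto | lra |].
    intros s Hs. apply Hbi. lra. }
  unfold lap. lra.
Qed.

(* Up to the last point [T] with [u2 <= u1] on [[0, T]], the gap [Δu1 - Δu2] is at least
   [e2 - e1 > 0]; by continuity it stays positive a little beyond [T], and then so does
   [u1 - u2 = invLap (Δu1 - Δu2)]. *)
Lemma int_sol_compare k e1 e2 u1 u2 :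
  int_sol k e1 u1 -> int_sol k e2 u2 -> e1 < e2 -> forall r, u2 r <= u1 r.
Proof.
  intros [Hc1 He1 Hp1 Hf1] [Hc2 He2 Hp2 Hf2] He.
  assert (Hdiff : forall t, u1 t - u2 t = invLap (fun s => lap e1 u1 s - lap e2 u2 s) t).
  { intros t. rewrite Hf1, Hf2, invLap_minus by (apply cont_lap; auto). unfold picard. ring. }
  assert (Hpos : forall t, 0 <= t -> u2 t <= u1 t).
  2:{ intros r. destruct (Rle_dec 0 r); [apply Hpos; auto|].
      rewrite <- He1, <- He2. apply Hpos; lra. }
  apply NNPP. intros Hn. apply not_all_ex_not in Hn. destruct Hn as [t0 Ht0].
  apply imply_to_and in Ht0. destruct Ht0 as [Ht0 Hlt]. apply Rnot_le_lt in Hlt.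
  set (S := fun t => 0 <= t /\ forall s, 0 <= s <= t -> u2 s <= u1 s).
  assert (HS0 : S 0).
  { split; [lra|]. intros s Hs. replace s with 0 by lra. rewrite Hf1, Hf2. unfold picard.
    rewrite !invLap_0. lra. }
  assert (HSb : bound S).
  { exists t0. intros t [Ht Hs]. apply Rnot_lt_le. intros Hlt'. specialize (Hs t0 ltac:(lra)). lra. }
  destruct (completeness S HSb (ex_intro _ 0 HS0)) as [T [HTub HTl]].
  assert (HT0 : 0 <= T) by (apply HTub, HS0).
  assert (Hbelow : forall s, 0 <= s < T -> u2 s <= u1 s).
  { intros s Hs. apply NNPP. intros Hn.
    assert (Hub : is_upper_bound S s).
    { intros t [Ht Hst]. apply Rnot_lt_le. intros Hts. apply Hn, Hst. lra. }
    specialize (HTl s Hub). lra. }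
  set (g := fun s => lap e1 u1 s - lap e2 u2 s).
  assert (Hg : cont g) by (apply cont_minus; apply cont_lap; auto).
  assert (HgT : forall t, 0 <= t <= T -> e2 - e1 <= g t) by (apply lap_gap; auto).
  destruct (proj1 (continuous_R_iff g T) (Hg T) ((e2 - e1) / 2) ltac:(lra)) as [d [Hd Hdd]].
  assert (HS' : S (T + d / 2)).
  { split; [lra|]. intros s Hs.
    assert (0 <= invLap g s).
    { apply invLap_ge_0; auto; [lra|]. intros y Hy. destruct (Rle_dec y T).
      - pose proof (HgT y ltac:(lra)). lra.
      - assert (Rabs (y - T) < d) by (rewrite Rabs_right; lra).
        specialize (Hdd y H). pose proof (HgT T ltac:(lra)).
        apply Rabs_lt_between in Hdd. lra. }
    rewrite <- Hdiff in H. lra. }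
  specialize (HTub _ HS'). lra.
Qed.

Definition lipschitz_on (f : R -> R) (Rr L : R) : Prop :=
  forall x y, Rabs x <= Rr -> Rabs y <= Rr -> Rabs (f x - f y) <= L * Rabs (x - y).

Definition unif_cv_on (g : nat -> R -> R) (gl : R -> R) (Rr : R) : Prop :=
  forall d, 0 < d -> exists N, forall n x, (n >= N)%nat -> Rabs x <= Rr -> Rabs (g n x - gl x) <= d.

Lemma Un_cv_const c : Un_cv (fun _ => c) c.
Proof. intros eps Heps. exists 0%nat. intros. unfold Rdist. rewrite Rminus_diag, Rabs_R0. lra. Qed.

Lemma Un_cv_S (a : nat -> R) l : Un_cv a l -> Un_cv (fun n => a (S n)) l.
Proof. intros H eps He. destruct (H eps He) as [N HN]. exists N. intros n Hn. apply HN. lia. Qed.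

Lemma Un_cv_le_const (a : nat -> R) l B : Un_cv a l -> (forall n, a n <= B) -> l <= B.
Proof.
  intros Hc Hb. apply Rnot_lt_le. intros Hlt.
  destruct (Hc (l - B)) as [N HN]; [lra|].
  specialize (HN N (Nat.le_refl N)). specialize (Hb N). unfold Rdist in HN.
  apply Rabs_lt_between in HN. lra.
Qed.

Lemma Un_cv_ge_const (a : nat -> R) l B : Un_cv a l -> (forall n, B <= a n) -> B <= l.
Proof.
  intros Hc Hb. apply Ropp_le_cancel, (Un_cv_le_const (fun n => - a n)); [apply CV_opp, Hc|].
  intros n. specialize (Hb n). lra.
Qed.

Lemma lipschitz_on_limit (g : nat -> R -> R) gl Rr L :
  (forall n, lipschitz_on (g n) Rr L) -> (forall x, Rabs x <= Rr -> Un_cv (fun n => g n x) (gl x)) ->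
  lipschitz_on gl Rr L.
Proof.
  intros Hl Hc x y Hx Hy.
  apply (Un_cv_le_const (fun n => Rabs (g n x - g n y))).
  - apply cv_cvabs, CV_minus; auto.
  - intros n. apply Hl; auto.
Qed.

Lemma cont_of_lipschitz_on (f : R -> R) :
  (forall Rr, 0 <= Rr -> exists L, 0 <= L /\ lipschitz_on f Rr L) -> cont f.
Proof.
  intros H x. apply continuous_R_iff. intros eps Heps.
  destruct (H (Rabs x + 1)) as [L [HL Hlip]]; [pose proof (Rabs_pos x); lra|].
  exists (Rmin 1 (eps / (L + 1))). split; [apply Rmin_glb_lt; [lra | apply Rdiv_lt_0_compat; lra]|].
  intros y Hy.
  assert (Hy1 : Rabs (y - x) < 1) by (eapply Rlt_le_trans; [exact Hy | apply Rmin_l]).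
  assert (Hy2 : Rabs (y - x) < eps / (L + 1)) by (eapply Rlt_le_trans; [exact Hy | apply Rmin_r]).
  eapply Rle_lt_trans; [apply Hlip|].
  - replace y with (x + (y - x)) by ring. eapply Rle_trans; [apply Rabs_triang | lra].
  - lra.
  - apply Rle_lt_trans with ((L + 1) * Rabs (y - x));
      [apply Rmult_le_compat_r; [apply Rabs_pos | lra]|].
    apply Rmult_lt_reg_l with (/ (L + 1)); [apply Rinv_0_lt_compat; lra|].
    rewrite <- Rmult_assoc, Rinv_l by lra. lra.
Qed.

Lemma eventually_all_le (c : nat -> nat -> Prop) :
  (forall j, exists N, forall n, (n >= N)%nat -> c j n) ->
  forall m, exists N, forall j n, (j <= m)%nat -> (n >= N)%nat -> c j n.
Proof.
  intros H m. induction m.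
  - destruct (H 0%nat) as [N HN]. exists N. intros j n Hj Hn. replace j with 0%nat by lia. auto.
  - destruct IHm as [N1 H1]. destruct (H (S m)) as [N2 H2]. exists (max N1 N2).
    intros j n Hj Hn. destruct (Nat.eq_dec j (S m)) as [->|Hne]; [apply H2 | apply H1]; lia.
Qed.

Lemma grid_point_near Rr h : 0 <= Rr -> 0 < h ->
  forall (i : nat) x, - Rr <= x <= Rr -> x <= - Rr + INR i * h ->
  exists j : nat, (j <= i)%nat /\ Rabs (x - Rmin (- Rr + INR j * h) Rr) <= h.
Proof.
  intros HR Hh. induction i; intros x Hx Hxi.
  - exists 0%nat. split; [lia|]. simpl in *.
    rewrite Rmult_0_l, Rplus_0_r, Rmin_left in * by lra. apply Rabs_le_between. lra.
  - destruct (Rle_dec x (- Rr + INR i * h)) as [Hle|Hgt].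
    + destruct (IHi x Hx Hle) as [j [Hj Hjx]]. exists j. split; [lia | auto].
    + exists (S i). split; [lia|]. rewrite S_INR in *.
      apply Rabs_le_between. unfold Rmin. destruct (Rle_dec (- Rr + (INR i + 1) * h) Rr); lra.
Qed.

(* Compare with the finitely many points of a grid of mesh [h] in [[- Rr, Rr]]. *)
Lemma unif_cv_of_lipschitz_on (g : nat -> R -> R) gl Rr L : 0 <= Rr -> 0 <= L ->
  (forall n, lipschitz_on (g n) Rr L) -> (forall x, Rabs x <= Rr -> Un_cv (fun n => g n x) (gl x)) ->
  unif_cv_on g gl Rr.
Proof.
  intros HR HL Hl Hc d Hd.
  pose proof (lipschitz_on_limit g gl Rr L Hl Hc) as Hgl.
  set (h := d / (3 * (L + 1))).
  assert (Hh : 0 < h) by (unfold h; apply Rdiv_lt_0_compat; lra).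
  assert (HLh : L * h <= d / 3).
  { apply Rle_trans with ((L + 1) * h); [apply Rmult_le_compat_r; lra|].
    unfold h. right. field. lra. }
  destruct (INR_unbounded (2 * Rr / h)) as [m Hm].
  set (xj := fun j : nat => Rmin (- Rr + INR j * h) Rr).
  assert (Hxj : forall j, Rabs (xj j) <= Rr).
  { intros j. unfold xj. apply Rabs_le_between. pose proof (pos_INR j).
    unfold Rmin; destruct (Rle_dec (- Rr + INR j * h) Rr); nra. }
  destruct (eventually_all_le (fun j n => Rabs (g n (xj j) - gl (xj j)) < d / 3)) with (m := m)
    as [N HN].
  { intros j. destruct (Hc (xj j) (Hxj j) (d / 3)) as [N HN]; [lra|].
    exists N. intros n Hn. apply (HN n Hn). }
  exists N. intros n x Hn Hx.
  apply Rabs_le_between in Hx.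
  destruct (grid_point_near Rr h HR Hh m x Hx) as [j [Hj Hjx]].
  { assert (2 * Rr <= INR m * h).
    { replace (2 * Rr) with ((2 * Rr / h) * h) by (field; lra). apply Rmult_le_compat_r; lra. }
    lra. }
  fold (xj j) in Hjx.
  assert (Hxa : Rabs x <= Rr) by (apply Rabs_le_between; lra).
  specialize (HN j n Hj Hn).
  pose proof (Hl n x (xj j) Hxa (Hxj j)) as H1.
  pose proof (Hgl x (xj j) Hxa (Hxj j)) as H2.
  assert (L * Rabs (x - xj j) <= d / 3) by (eapply Rle_trans; [apply Rmult_le_compat_l|]; eauto).
  replace (g n x - gl x) with ((g n x - g n (xj j)) + (g n (xj j) - gl (xj j)) + (gl (xj j) - gl x))
    by ring.
  rewrite Rabs_minus_sym in H2.
  eapply Rle_trans; [apply Rabs_triang|]. eapply Rle_trans; [apply Rplus_le_compat_r, Rabs_triang|].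
  lra.
Qed.

Lemma unif_cv_invLap (g : nat -> R -> R) gl Rr : 0 <= Rr -> (forall n, cont (g n)) -> cont gl ->
  unif_cv_on g gl Rr -> unif_cv_on (fun n => invLap (g n)) (invLap gl) Rr.
Proof.
  intros HR Hc Hcl Hu d Hd.
  assert (Hrr : 0 < Rr * Rr + 1) by nra.
  destruct (Hu (d / (Rr * Rr + 1))) as [N HN]; [apply Rdiv_lt_0_compat; lra|].
  exists N. intros n x Hn Hx. rewrite <- invLap_minus by auto.
  eapply Rle_trans; [apply (invLap_bound _ (cont_minus _ _ (Hc n) Hcl) Rr (d / (Rr * Rr + 1)))|].
  - intros s Hs. apply HN; auto.
  - exact Hx.
  - apply Rle_trans with ((Rr * Rr + 1) * (d / (Rr * Rr + 1))); [|right; field; lra].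
    assert (0 < d / (Rr * Rr + 1)) by (apply Rdiv_lt_0_compat; lra). nra.
Qed.

Lemma unif_cv_shift (c : nat -> R) cl (g : nat -> R -> R) gl Rr : Un_cv c cl ->
  unif_cv_on g gl Rr -> unif_cv_on (fun n x => c n + g n x) (fun x => cl + gl x) Rr.
Proof.
  intros Hc Hu d Hd.
  destruct (Hc (d / 2)) as [N1 HN1]; [lra|]. destruct (Hu (d / 2)) as [N2 HN2]; [lra|].
  exists (max N1 N2). intros n x Hn Hx.
  specialize (HN1 n ltac:(lia)). specialize (HN2 n x ltac:(lia) Hx). unfold Rdist in HN1.
  replace (c n + g n x - (cl + gl x)) with ((c n - cl) + (g n x - gl x)) by ring.
  eapply Rle_trans; [apply Rabs_triang | lra].
Qed.

Lemma inv_cube_lipschitz a b m : 0 < m -> m <= a -> m <= b ->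
  Rabs (- / (a ^ 3) - - / (b ^ 3)) <= 3 / m ^ 4 * Rabs (a - b).
Proof.
  intros Hm Ha Hb.
  assert (Hmin : m <= Rmin b a) by (apply Rmin_glb; lra).
  destruct (MVT_gen (fun x => - / (x ^ 3)) b a (fun x => 3 / x ^ 4)) as [c [Hc Heq]].
  - intros x Hx. assert (0 < x) by lra.
    auto_derive; [apply Rgt_not_eq; repeat apply Rmult_lt_0_compat; lra | field; lra].
  - intros x Hx. assert (0 < x) by lra.
    apply continuity_pt_filterlim, (ex_derive_continuousR (fun y => - / y ^ 3)). auto_derive.
    apply Rgt_not_eq; repeat apply Rmult_lt_0_compat; lra.
  - rewrite Heq, Rabs_mult. apply Rmult_le_compat_r; [apply Rabs_pos|].
    assert (Hcm : m <= c) by lra.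
    rewrite Rabs_right by (apply Rle_ge, Rlt_le, Rdiv_lt_0_compat, pow_lt; lra).
    unfold Rdiv. apply Rmult_le_compat_l; [lra|].
    apply Rinv_le_contravar; [apply pow_lt; lra | apply pow_incr; lra].
Qed.

Lemma force_abs_le u s m : 0 < m -> m <= u s -> Rabs (force u s) <= / m ^ 3.
Proof.
  intros Hm Hu. unfold force. rewrite Rabs_Ropp, Rabs_right.
  - apply Rinv_le_contravar; [apply pow_lt; auto | apply pow_incr; lra].
  - apply Rle_ge, Rlt_le, Rinv_0_lt_compat, pow_lt. lra.
Qed.

Lemma unif_cv_force (a : nat -> R -> R) ul Rr m : 0 < m ->
  (forall n x, Rabs x <= Rr -> m <= a n x) -> (forall x, Rabs x <= Rr -> m <= ul x) ->
  unif_cv_on a ul Rr -> unif_cv_on (fun n => force (a n)) (force ul) Rr.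
Proof.
  intros Hm Ha Hul Hu d Hd.
  assert (HK : 0 < 3 / m ^ 4) by (apply Rdiv_lt_0_compat, pow_lt; lra).
  destruct (Hu (d / (3 / m ^ 4))) as [N HN]; [apply Rdiv_lt_0_compat; lra|].
  exists N. intros n x Hn Hx. unfold force.
  eapply Rle_trans; [apply (inv_cube_lipschitz _ _ m); auto|].
  apply Rle_trans with (3 / m ^ 4 * (d / (3 / m ^ 4))); [|right; field; lra].
  apply Rmult_le_compat_l; [lra | apply HN; auto].
Qed.

Lemma picard_lipschitz k e u Rr m E : 0 < m -> cont u -> (forall x, 0 < u x) ->
  (forall x, Rabs x <= Rr -> m <= u x) -> Rabs e <= E ->
  lipschitz_on (picard k e u) Rr (Rr * (E + Rr * (1 + Rr * / m ^ 3 * Rr) * Rr)).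
Proof.
  intros Hm Hc Hp Hmu HE x y Hx Hy.
  replace (picard k e u x - picard k e u y) with (invLap (lap e u) x - invLap (lap e u) y)
    by (unfold picard; ring).
  apply invLap_lipschitz; auto; [apply cont_lap; auto|]. intros s Hs.
  unfold lap. eapply Rle_trans; [apply Rabs_triang|]. rewrite Rabs_Ropp.
  apply Rplus_le_compat; auto. apply invLap_bound; auto; [apply cont_bilap; auto|].
  intros t Ht. unfold bilap. eapply Rle_trans; [apply Rabs_triang|]. rewrite Rabs_R1.
  apply Rplus_le_compat_l, invLap_bound; auto; [apply cont_force; auto|].
  intros; apply force_abs_le; auto.
Qed.

Lemma unif_cv_picard k (es : nat -> R) e (a : nat -> R -> R) ul Rr m : 0 <= Rr -> 0 < m ->
  (forall n, cont (a n)) -> (forall n x, 0 < a n x) -> cont ul -> (forall x, 0 < ul x) ->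
  (forall n x, Rabs x <= Rr -> m <= a n x) -> (forall x, Rabs x <= Rr -> m <= ul x) ->
  Un_cv es e -> unif_cv_on a ul Rr ->
  unif_cv_on (fun n => picard k (es n) (a n)) (picard k e ul) Rr.
Proof.
  intros HR Hm Hca Hpa Hcu Hpu Hma Hmu Hes Hu.
  apply (unif_cv_shift (fun _ => k)); [apply Un_cv_const|].
  apply unif_cv_invLap; auto; [intros; apply cont_lap; auto | apply cont_lap; auto|].
  apply (unif_cv_shift (fun n => - es n)); [apply CV_opp, Hes|].
  apply unif_cv_invLap; auto; [intros; apply cont_bilap; auto | apply cont_bilap; auto|].
  apply (unif_cv_shift (fun _ => 1)); [apply Un_cv_const|].
  apply unif_cv_invLap; auto; [intros; apply cont_force; auto | apply cont_force; auto|].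
  apply unif_cv_force with m; auto.
Qed.

Lemma unif_cv_on_Un_cv (g : nat -> R -> R) gl Rr x :
  unif_cv_on g gl Rr -> Rabs x <= Rr -> Un_cv (fun n => g n x) (gl x).
Proof.
  intros Hu Hx eps Heps. destruct (Hu (eps / 2)) as [N HN]; [lra|].
  exists N. intros n Hn. unfold Rdist. specialize (HN n x Hn Hx). lra.
Qed.

Lemma int_sol_limit k (es : nat -> R) e (a : nat -> R -> R) ul :
  Un_cv es e -> (forall n, cont (a n)) -> (forall n, even_fun (a n)) ->
  (forall Rr, 0 <= Rr -> exists m, 0 < m /\ forall n x, Rabs x <= Rr -> m <= a n x) ->
  (forall Rr, 0 <= Rr -> exists L, 0 <= L /\ forall n, lipschitz_on (a n) Rr L) ->
  (forall r, Un_cv (fun n => a n r) (ul r)) ->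
  (forall r, Un_cv (fun n => picard k (es n) (a n) r) (ul r)) ->
  int_sol k e ul.
Proof.
  intros Hes Hca Hea Hlow Hlip Hcva Hcvp.
  assert (Hlu : forall Rr, 0 <= Rr -> exists m, 0 < m /\
            (forall n x, Rabs x <= Rr -> m <= a n x) /\ forall x, Rabs x <= Rr -> m <= ul x).
  { intros Rr HR. destruct (Hlow Rr HR) as [m [Hm Hmm]]. exists m. repeat split; auto.
    intros x Hx. apply (Un_cv_ge_const (fun n => a n x)); auto. }
  assert (Hpos : forall x, (forall n, 0 < a n x) /\ 0 < ul x).
  { intros x. destruct (Hlu (Rabs x) (Rabs_pos x)) as [m [Hm [Ha Hu]]].
    specialize (Hu x (Rle_refl _)). split; [intros n; specialize (Ha n x (Rle_refl _))|]; lra. }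
  assert (Hcu : cont ul).
  { apply cont_of_lipschitz_on. intros Rr HR. destruct (Hlip Rr HR) as [L [HL HLL]].
    exists L. split; auto. apply (lipschitz_on_limit a); auto. }
  constructor; [exact Hcu | | apply Hpos |].
  - intros r. apply (UL_sequence (fun n => a n r)); auto.
    apply (Un_cv_ext (fun n => a n (- r))); auto. intros; apply Hea.
  - intros r. set (Rr := Rabs r). assert (HR : 0 <= Rr) by apply Rabs_pos.
    destruct (Hlu Rr HR) as [m [Hm [Hma Hmu]]]. destruct (Hlip Rr HR) as [L [HL HLL]].
    apply (UL_sequence (fun n => picard k (es n) (a n) r)); auto.
    apply (unif_cv_on_Un_cv (fun n => picard k (es n) (a n)) (picard k e ul) Rr); [|apply Rle_refl].
    apply (unif_cv_picard k es e a ul Rr m); auto; try apply Hpos.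
    + intros n x. apply Hpos.
    + apply (unif_cv_of_lipschitz_on a ul Rr L); auto.
Qed.

(** * Existence for [eps = 1] *)

Lemma invLap_force_barrier r : 0 <= r -> - / 4 <= invLap (force (fun s => 1 + s ^ 2)) r.
Proof.
  intros Hr. unfold force.
  assert (Hp : forall s, 0 < 1 + s ^ 2) by (intros s; pose proof (pow2_ge_0 s); lra).
  assert (Hg : cont (fun s => - / (1 + s ^ 2) ^ 3)).
  { intros x. pose proof (Hp x). apply ex_derive_continuousR. auto_derive.
    apply Rgt_not_eq. simpl in *. repeat apply Rmult_lt_0_compat; lra. }
  assert (Hcs : cont (fun s => s * - / (1 + s ^ 2) ^ 3))
    by (apply cont_mult; auto; intros y; apply continuous_id).
  destruct (Req_dec r 0) as [->|Hne]; [rewrite invLap_0; lra|].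
  rewrite invLap_kernel by (auto; lra).
  apply Rle_trans with (RInt (fun s => s * - / (1 + s ^ 2) ^ 3) 0 r).
  - rewrite (RInt_deriveR (fun s => / (4 * (1 + s ^ 2) ^ 2))).
    + assert (0 < / (4 * (1 + r ^ 2) ^ 2)).
      { apply Rinv_0_lt_compat, Rmult_lt_0_compat, pow_lt; [lra | apply Hp]. }
      replace (/ (4 * (1 + 0 ^ 2) ^ 2)) with (/ 4) by (simpl; field). lra.
    + intros x _. pose proof (Hp x). auto_derive.
      * apply Rgt_not_eq. simpl in *. repeat apply Rmult_lt_0_compat; lra.
      * simpl in *. field. lra.
    + intros x _. apply Hcs.
  - apply RInt_le; [lra | apply ex_RInt_cont; auto | |].
    + apply ex_RInt_cont. apply cont_mult; auto. apply cont_mult; [intros y; apply continuous_id|].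
      intros y. apply ex_derive_continuousR. auto_derive. lra.
    + intros x Hx.
      assert (0 < / (1 + x ^ 2) ^ 3) by (apply Rinv_0_lt_compat, pow_lt, Hp).
      assert (0 <= x / r * x) by (apply Rmult_le_pos; [apply Rdiv_le_0_compat|]; lra).
      replace (x * (1 - x / r) * - / (1 + x ^ 2) ^ 3)
        with (x * - / (1 + x ^ 2) ^ 3 + (x / r * x) * / (1 + x ^ 2) ^ 3) by ring.
      assert (0 <= (x / r * x) * / (1 + x ^ 2) ^ 3) by (apply Rmult_le_pos; lra). lra.
Qed.

Lemma picard_ge_barrier k u r : 100 <= k -> cont u -> (forall x, 1 + x ^ 2 <= u x) -> 0 <= r ->
  1 + r ^ 2 <= picard k 1 u r.
Proof.
  intros Hk Hc Hl Hr.
  assert (Hp : forall x, 0 < u x) by (intros x; specialize (Hl x); pose proof (pow2_ge_0 x); lra).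
  assert (Hb : cont (fun s => 1 + s ^ 2)) by (apply cont_plus; [apply cont_const | apply cont_pow]).
  assert (Hw : forall t, 0 <= t -> 3 / 4 <= bilap u t).
  { intros t Ht. unfold bilap.
    assert (invLap (force (fun s => 1 + s ^ 2)) t <= invLap (force u) t).
    { apply invLap_le; [apply cont_force; auto | apply cont_force; auto | exact Ht |].
      - intros s. pose proof (pow2_ge_0 s). lra.
      - intros s Hs. apply force_le; auto. pose proof (pow2_ge_0 s). lra. }
    pose proof (invLap_force_barrier t Ht). lra. }
  assert (Hv : forall s, 0 <= s -> - 1 + / 8 * s ^ 2 <= lap 1 u s).
  { intros s Hs. unfold lap.
    replace (/ 8 * s ^ 2) with (invLap (fun _ => 3 / 4) s) by (rewrite invLap_const; field).
    apply Rplus_le_compat_l, invLap_le; [apply cont_const | apply cont_bilap; auto | lra |].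
    intros; apply Hw; lra. }
  assert (invLap (fun s => - 1 + / 8 * s ^ 2) r <= invLap (lap 1 u) r).
  { apply invLap_le; [apply cont_plus; [apply cont_const | apply cont_scal, cont_pow]
                     | apply cont_lap; auto | lra |].
    intros; apply Hv; lra. }
  rewrite invLap_quad in H. unfold picard.
  (* [k - 1 - 7 r^2 / 6 + r^4 / 160] is smallest at [r^2 = 280 / 3]. *)
  assert (0 <= (r ^ 2 - 280 / 3) ^ 2) by apply pow2_ge_0.
  replace (r ^ 4) with ((r ^ 2) ^ 2) in H by ring. nra.
Qed.

Lemma picard_le_mono k e u1 u2 r : cont u1 -> cont u2 -> (forall x, 0 < u1 x) ->
  even_fun u1 -> even_fun u2 -> (forall x, u1 x <= u2 x) -> picard k e u1 r <= picard k e u2 r.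
Proof.
  intros Hc1 Hc2 Hp1 He1 He2 Hle.
  assert (Hp2 : forall x, 0 < u2 x) by (intros x; specialize (Hp1 x); specialize (Hle x); lra).
  assert (Hpos : forall r, 0 <= r -> picard k e u1 r <= picard k e u2 r).
  { intros r0 Hr.
    apply Rplus_le_compat_l, invLap_le; [apply cont_lap; auto | apply cont_lap; auto | lra |].
    intros s Hs.
    apply Rplus_le_compat_l, invLap_le; [apply cont_bilap; auto | apply cont_bilap; auto | lra |].
    intros t Ht.
    apply Rplus_le_compat_l, invLap_le; [apply cont_force; auto | apply cont_force; auto | lra |].
    intros x Hx. apply force_le; auto. }
  destruct (Rle_dec 0 r); [apply Hpos; auto|].
  rewrite <- (picard_even u1), <- (picard_even u2); auto. apply Hpos. lra.
Qed.

(* Monotone iteration for [eps = 1], started at the supersolution given by [picard_le];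
   the iterates stay above the subsolution [1 + r ^ 2]. *)
Fixpoint picard_iter (k : R) (n : nat) : R -> R :=
  match n with
  | O => fun r => k - 1 * r ^ 2 / 6 + r ^ 4 / 120
  | S n => picard k 1 (picard_iter k n)
  end.

Section Iteration.

Variable k : R.
Hypothesis Hk : 100 <= k.

Lemma picard_iter_inv n :
  cont (picard_iter k n) /\ even_fun (picard_iter k n) /\
  (forall r, 1 + r ^ 2 <= picard_iter k n r) /\
  (forall r, picard_iter k n r <= picard_iter k 0 r).
Proof.
  induction n as [|n [Hc [He [Hl Hu]]]].
  - simpl. split; [|split; [|split]].
    + intros x. apply ex_derive_continuousR. auto_derive. auto.
    + intros r. simpl. field.
    + (* [k - 1 - 7 r^2 / 6 + r^4 / 120] is smallest at [r^2 = 70]. *)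
      intros r. assert (0 <= (r ^ 2 - 70) ^ 2) by apply pow2_ge_0.
      replace (r ^ 4) with ((r ^ 2) ^ 2) by ring. nra.
    + intros r. lra.
  - assert (Hp : forall x, 0 < picard_iter k n x).
    { intros x. specialize (Hl x). pose proof (pow2_ge_0 x). lra. }
    cbn [picard_iter]. split; [|split; [|split]].
    + apply cont_picard; auto.
    + apply picard_even; auto.
    + intros r. destruct (Rle_dec 0 r); [apply picard_ge_barrier; auto|].
      rewrite <- (picard_even _ Hc Hp He k 1 r).
      replace (r ^ 2) with ((- r) ^ 2) by ring. apply picard_ge_barrier; auto. lra.
    + intros r. destruct (Rle_dec 0 r); [apply picard_le; auto|].
      rewrite <- (picard_even _ Hc Hp He k 1 r).
      replace (r ^ 2) with ((- r) ^ 2) by ring. replace (r ^ 4) with ((- r) ^ 4) by ring.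
      apply picard_le; auto. lra.
Qed.

Lemma picard_iter_pos n x : 0 < picard_iter k n x.
Proof.
  destruct (picard_iter_inv n) as (_ & _ & Hl & _). specialize (Hl x).
  pose proof (pow2_ge_0 x). lra.
Qed.

Lemma picard_iter_decr r : Un_decreasing (fun n => picard_iter k n r).
Proof.
  intros n. revert r. induction n; intros r.
  - apply (picard_iter_inv 1).
  - change (picard k 1 (picard_iter k (S n)) r <= picard k 1 (picard_iter k n) r).
    apply picard_le_mono; [apply picard_iter_inv | apply picard_iter_inv | apply picard_iter_pos
      | apply picard_iter_inv | apply picard_iter_inv | apply IHn].
Qed.

Lemma int_sol_exists_1 : exists u, int_sol k 1 u.
Proof.
  assert (Hlim : forall r, exists l, Un_cv (fun n => picard_iter k n r) l).
  { intros r. destruct (decreasing_cv _ (picard_iter_decr r)) as [l Hl]; [|exists l; auto].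
    exists 0. intros x [i ->]. unfold opp_seq. pose proof (picard_iter_pos i r). lra. }
  destruct (functional_choice _ Hlim) as [ul Hul].
  exists ul. apply (int_sol_limit k (fun _ => 1) 1 (fun n => picard_iter k (S n)));
    [apply Un_cv_const | intros n; apply picard_iter_inv | intros n; apply picard_iter_inv | | | |].
  - intros Rr HR. exists 1. split; [lra|]. intros n x _.
    destruct (picard_iter_inv (S n)) as (_ & _ & Hl & _). specialize (Hl x).
    pose proof (pow2_ge_0 x). lra.
  - intros Rr HR. set (L := Rr * (1 + Rr * (1 + Rr * / 1 ^ 3 * Rr) * Rr)).
    exists L. split.
    + unfold L. rewrite pow1, Rinv_1.
      assert (0 <= Rr * (1 + Rr * 1 * Rr) * Rr) by (apply Rmult_le_pos; nra). nra.
    + intros n. change (lipschitz_on (picard k 1 (picard_iter k n)) Rr L).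
      apply picard_lipschitz;
        [lra | apply picard_iter_inv | apply picard_iter_pos | | rewrite Rabs_R1; lra].
      intros x _. destruct (picard_iter_inv n) as (_ & _ & Hl & _). specialize (Hl x).
      pose proof (pow2_ge_0 x). lra.
  - intros r. apply (Un_cv_S (fun n => picard_iter k n r)), Hul.
  - intros r.
    apply (Un_cv_S (fun n => picard_iter k (S n) r)), (Un_cv_S (fun n => picard_iter k n r)), Hul.
Qed.

End Iteration.

(** * The supremum of [S_k] *)

Lemma int_sol_lipschitz k eps u Rr E : int_sol k eps u -> 0 <= eps <= E -> 0 < k -> 0 <= Rr ->
  lipschitz_on u Rr (Rr * (E + Rr * (1 + Rr * / lower_const k Rr ^ 3 * Rr) * Rr)).
Proof.
  intros Hs He Hk HR x y Hx Hy. pose proof Hs as [Hc _ Hp Hfix]. rewrite !Hfix.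
  apply picard_lipschitz; auto; [apply lower_const_pos; auto | |].
  - intros z Hz. apply (int_sol_lower_bound k eps u Rr); auto. lra.
  - rewrite Rabs_right; lra.
Qed.

Lemma lub_strict_approx (A : R -> Prop) l : is_lub A l -> ~ A l ->
  exists e : nat -> R, (forall n, A (e n)) /\ (forall n, e n < e (S n)) /\ Un_cv e l.
Proof.
  intros [Hub Hl] Hnot.
  assert (Happ : forall x, exists y, x < l -> A y /\ x < y /\ y < l).
  { intros x. destruct (Rlt_dec x l) as [Hx|Hx]; [|exists 0; intros; contradiction].
    apply NNPP. intros Hn.
    assert (Hb : is_upper_bound A x).
    { intros y Hy. apply Rnot_lt_le. intros Hxy. apply Hn. exists y. intros _.
      assert (y <= l) by (apply Hub; auto).
      destruct (Req_dec y l) as [->|]; [contradiction | repeat split; auto; lra]. }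
    specialize (Hl x Hb). lra. }
  destruct (functional_choice _ Happ) as [F HF].
  set (e := fix e (n : nat) : R :=
         match n with O => F (l - 1) | S n => F (Rmax (e n) (l - / INR (S (S n)))) end).
  assert (Hstep : forall n, e n < l -> A (e (S n)) /\ e n < e (S n) /\ e (S n) < l
                            /\ l - / INR (S (S n)) < e (S n)).
  { intros n Hn. assert (0 < / INR (S (S n))) by (apply Rinv_0_lt_compat, lt_0_INR; lia).
    destruct (HF (Rmax (e n) (l - / INR (S (S n))))) as (H1 & H2 & H3); [apply Rmax_lub_lt; lra|].
    pose proof (Rmax_l (e n) (l - / INR (S (S n)))). pose proof (Rmax_r (e n) (l - / INR (S (S n)))).
    change (e (S n)) with (F (Rmax (e n) (l - / INR (S (S n))))).
    split; [exact H1 | repeat split; lra]. }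
  assert (He : forall n, A (e n) /\ e n < l /\ l - / INR (S n) < e n).
  { induction n as [|n (_ & IH2 & _)].
    - simpl. rewrite Rinv_1. destruct (HF (l - 1)) as (A1 & A2 & A3); [lra|].
      split; [exact A1 | repeat split; lra].
    - destruct (Hstep n IH2) as (B1 & _ & B3 & B4). auto. }
  exists e. split; [|split].
  - apply He.
  - intros n. apply Hstep, He.
  - intros eps Heps. destruct (INR_unbounded (/ eps)) as [N HN]. exists N. intros n Hn.
    destruct (He n) as (_ & B2 & B3). unfold Rdist. rewrite Rabs_left by lra.
    assert (/ INR (S n) < eps).
    { assert (INR N <= INR (S n)) by (apply le_INR; lia).
      rewrite <- (Rinv_inv eps). apply Rinv_lt_contravar; [|lra].
      apply Rmult_lt_0_compat; [apply Rinv_0_lt_compat; lra | apply lt_0_INR; lia]. }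
    lra.
Qed.

Lemma S_k_1 k : 100 <= k -> S_k k 1.
Proof.
  intros Hk. split; [lra|]. destruct (int_sol_exists_1 k Hk) as [u Hu].
  apply (int_sol_radial_sol k 1 u Hu).
Qed.

Lemma S_k_le k eps : S_k k eps -> eps <= 1 + 6 * k / 5.
Proof.
  intros [He Hs]. destruct (radial_sol_int_sol k eps Hs) as [u Hu].
  pose proof (int_sol_eps_bound k eps u Hu He). destruct (Rle_dec eps 1); nra.
Qed.

(* Solutions for [e n] increasing to [sup S_k] decrease with [n]; their limit solves (P) at the
   supremum, thanks to the lower bound and Lipschitz bounds that are uniform in [n]. *)
Lemma S_k_sup_attained k estar : 0 < k -> is_lub (S_k k) estar -> has_pos_entire_radial_sol k estar.
Proof.
  intros Hk Hlub. destruct (classic (S_k k estar)) as [Hin|Hnin]; [apply Hin|].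
  destruct (lub_strict_approx _ _ Hlub Hnin) as [e (HeS & Hinc & Hcv)].
  assert (Hsol : forall n, exists u, int_sol k (e n) u) by (intros n; apply radial_sol_int_sol, HeS).
  destruct (functional_choice _ Hsol) as [U HU].
  assert (Hepos : forall n, 0 < e n) by (intros n; apply HeS).
  assert (Hele : forall n, e n <= estar) by (intros n; apply Hlub, HeS).
  assert (Hlim : forall r, exists l, Un_cv (fun n => U n r) l).
  { intros r. destruct (decreasing_cv (fun n => U n r)) as [l Hl]; [| |exists l; auto].
    - intros n. apply (int_sol_compare k (e n) (e (S n))); auto.
    - exists 0. intros x [i ->]. unfold opp_seq. pose proof (int_sol_pos _ _ _ (HU i) r). lra. }
  destruct (functional_choice _ Hlim) as [ul Hul].
  apply (int_sol_radial_sol k estar ul).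
  apply (int_sol_limit k e estar U ul Hcv);
    [intros n; apply HU | intros n; apply HU | | | exact Hul |].
  - intros Rr HR. exists (lower_const k Rr). split; [apply lower_const_pos; auto|].
    intros n x Hx. apply (int_sol_lower_bound k (e n) (U n) Rr); auto. apply Rlt_le, Hepos.
  - intros Rr HR. assert (Hm : 0 < / lower_const k Rr ^ 3)
      by (apply Rinv_0_lt_compat, pow_lt, lower_const_pos; auto).
    assert (0 <= estar) by (specialize (Hele 0%nat); specialize (Hepos 0%nat); lra).
    eexists. split.
    2:{ intros n. apply (int_sol_lipschitz k (e n)); auto. split; auto. apply Rlt_le, Hepos. }
    assert (0 <= Rr * / lower_const k Rr ^ 3 * Rr)
      by (apply Rmult_le_pos; [apply Rmult_le_pos|]; lra).
    assert (0 <= Rr * (1 + Rr * / lower_const k Rr ^ 3 * Rr) * Rr)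
      by (apply Rmult_le_pos; [apply Rmult_le_pos|]; lra).
    apply Rmult_le_pos; lra.
  - intros r. apply (Un_cv_ext (fun n => U n r)); [intros n; apply HU | apply Hul].
Qed.

Theorem lemma3 :
  exists k0 : R, 0 < k0 /\
    forall k : R, k0 <= k ->
      (exists eps, S_k k eps) /\
      bound (S_k k) /\
      (forall eps_star : R, is_lub (S_k k) eps_star ->
         has_pos_entire_radial_sol k eps_star).
Proof.
  exists 100. split; [lra|]. intros k Hk. split; [|split].
  - exists 1. apply S_k_1, Hk.
  - exists (1 + 6 * k / 5). intros eps Heps. apply S_k_le, Heps.
  - intros eps_star Hlub. apply S_k_sup_attained; [lra | exact Hlub].
Qed.
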